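(* Assume Conditions A, B and C. Then there exists $(y_0^*,z_0^* )\in\mathcal R$ with $F_0(y_0^*,z_0^* )=F_0^*=\inf\{F_0(y,z):(y,z)\in\overline{\mathcal R}\}$.
   Context: Setting. $\mathcal I=(a,b)$, $-\infty\le a<b\le\infty$; $\mu,\sigma$ continuous on $\mathcal I$, $\sigma\neq0$; $X_0$ the regular diffusion $dX_0=\mu(X_0)dt+\sigma(X_0)dW$, $X_0(0)=x_0\in\mathcal I$. Scale density $s(x)=\exp(-\int^x2\mu/\sigma^2)$, scale function $S=\int s$, $S[y,z]=S(z)-S(y)$ ($dS$), speed density $m=1/(\sigma^2s)$, speed measure $M[y,z]=\int_y^z m$ ($dM$). Feller boundary classification; attainable means regular or exit. Condition A: $S(a,x]<\infty$, $S[x,b)=\infty$ for $x\in\mathcal I$ (so $a$ is regular/exit/natural, $b$ natural/entrance); if $a$ reflecting, $\lim_{x\to a}s(x)M[x,b)<\infty$; if $b$ natural, $M[y,b)<\infty$ for $y\in\mathcal I$; infinite boundaries are natural. $\mathcal E$ is $\mathcal I$ with $a$ added if attainable and $b$ added if entrance; $\mathcal R=\{(y,z)\in\mathcal E^2:y<z\}$, $\overline{\mathcal R}=\{(y,z)\in\mathcal E^2:y\le z\}$. Condition B: (a) $c_0:\mathcal E\to[0,\infty)$ continuous; at natural boundaries $c_0(a)=\lim_{x\to a}c_0(x)$, $c_0(b)=\lim_{x\to b}c_0(x)$ exist in $[0,\infty]$, with $c_0(\pm\infty)=\infty$ at infinite boundaries; $\int_y^bc_0\,dM<\infty$ for $y\in\mathcal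 I$; if $a$ reflecting, $\lim_{x\to a}s(x)\int_x^bc_0\,dM<\infty$. (b) $c_1:\overline{\mathcal R}\to[0,\infty]$ continuous, $c_1\ge k_1>0$, $c_1(\cdot,z)$ is $C^1$ near $a$ for $z\in\mathcal E\setminus\{a\}$, $c_1(y,\cdot)$ is $C^1$ near $b$ for $y\in\mathcal E\setminus\{b\}$. Functions: $g_0(x)=\int_{x_0}^x\int_u^b2c_0(v)\,dM(v)\,dS(u)$, $\zeta(x)=\int_{x_0}^x2M[u,b)\,dS(u)$ on $\mathcal I$, extended by continuity (possibly to $\pm\infty$). $F_0(y,z)=\frac{c_1(y,z)+g_0(z)-g_0(y)}{\zeta(z)-\zeta(y)}$ for $(y,z)\in\mathcal R$, $F_0(y,y)=\infty$, $F_0^*=\inf_{\overline{\mathcal R}}F_0$. Condition C: (a) $a$ is regular or exit, or $a$ is natural and either (i) $c_0(a)=\infty$, or (ii) $c_0(a)<\infty$, for each $z\in\mathcal E$ there is $y_z>a$ such that $\frac{-\partial_yc_1(y,z)+g_0'(y)}{\zeta'(y)}>F_0(y,z)$ for all $a<y<y_z$, and there is $(\hat y,\hat z)\in\mathcal R$ with $F_0(\hat y,\hat z)<c_0(a)$; (b) $b$ is entrance, or $b$ is natural and either (i) $c_0(b)=\infty$, or (ii) $c_0(b)<\infty$, for each $y\in\mathcal E$ there is $z_y<b$ such that $\frac{\partial_zc_1(y,z)+g_0'(z)}{\zeta'(z)}>F_0(y,z)$ for all $z_y<z<b$, and there is $(\tilde y,\tilde z)\in\mathcal R$ with $F_0(\tilde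 y,\tilde z)<c_0(b)$. *)

From Stdlib Require Import Reals ClassicalEpsilon.
Open Scope R_scope.

(* Nonnegative extended reals [0,+oo] are represented by Fin r | PInf. *)
Inductive Rbar : Type := Fin (r : R) | PInf.

Definition Rbar_le (x y : Rbar) : Prop :=
  match x, y with
  | _, PInf => True
  | PInf, Fin _ => False
  | Fin r, Fin s => r <= s
  end.

Definition Rbar_lt (x y : Rbar) : Prop :=
  match x, y with
  | Fin r, Fin s => r < s
  | Fin _, PInf => True
  | PInf, _ => False
  end.

(* real part (only used where the value is known to be finite) *)
Definition Rbar_real (x : Rbar) : R := match x with Fin r => r | PInf => 0 end.

(* Total oriented Riemann integral: the Stdlib RiemannInt when f is
   Riemann integrable between x and y, and 0 otherwise. *)
Definition Rint (f : R -> R) (x y : R) : R :=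
  match excluded_middle_informative (inhabited (Riemann_integrable f x y)) with
  | left H => RiemannInt (epsilon H (fun _ => True))
  | right _ => 0
  end.

Section Setting.
(* Endpoints of I = (a,b): a = None means a = -oo, b = None means b = +oo. *)
Variables (a b : option R).

Definition gtA (x : R) : Prop := match a with Some a' => a' < x | None => True end.
Definition ltB (x : R) : Prop := match b with Some b' => x < b' | None => True end.
Definition inI (x : R) : Prop := gtA x /\ ltB x.

Definition near_a (P : R -> Prop) : Prop :=
  exists w, inI w /\ forall x, gtA x -> x < w -> P x.
Definition near_b (P : R -> Prop) : Prop :=
  exists w, inI w /\ forall x, w < x -> ltB x -> P x.

Definition lim_a (f : R -> R) (L : R) : Prop :=
  forall eps, 0 < eps -> near_a (fun x => Rabs (f x - L) < eps).
Definition lim_b (f : R -> R) (L : R) : Prop :=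
  forall eps, 0 < eps -> near_b (fun x => Rabs (f x - L) < eps).
Definition lim_a_bar (f : R -> R) (L : Rbar) : Prop :=
  match L with Fin l => lim_a f l | PInf => forall K, near_a (fun x => K < f x) end.
Definition lim_b_bar (f : R -> R) (L : Rbar) : Prop :=
  match L with Fin l => lim_b f l | PInf => forall K, near_b (fun x => K < f x) end.

(* Improper integrals  int_y^b f  and  int_a^x f  (finiteness, value). *)
Definition Ib_fin (f : R -> R) (y : R) : Prop := exists L, lim_b (fun z => Rint f y z) L.
Definition Ib (f : R -> R) (y : R) : R :=
  epsilon (inhabits 0) (fun L => lim_b (fun z => Rint f y z) L).
Definition Ia_fin (f : R -> R) (x : R) : Prop := exists L, lim_a (fun y => Rint f y x) L.

Variables (mu sigma : R -> R) (x0 : R).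

Definition sdens (x : R) : R :=
  exp (- Rint (fun u => 2 * mu u / (sigma u) ^ 2) x0 x).
Definition mdens (x : R) : R := / ((sigma x) ^ 2 * sdens x).

(* Feller boundary classification (Karlin-Taylor tests, reference point x0):
   Sigma(a) = int_a^x0 M[u,x0] dS(u),  N(a) = int_a^x0 S[u,x0] dM(u),
   Sigma(b) = int_x0^b M[x0,u] dS(u),  N(b) = int_x0^b S[x0,u] dM(u). *)
Definition SigA : Prop := Ia_fin (fun u => Rint mdens u x0 * sdens u) x0.
Definition NA : Prop := Ia_fin (fun u => Rint sdens u x0 * mdens u) x0.
Definition SigB : Prop := Ib_fin (fun u => Rint mdens x0 u * sdens u) x0.
Definition NB : Prop := Ib_fin (fun u => Rint sdens x0 u * mdens u) x0.

Definition regular_a := SigA /\ NA.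
Definition exit_a := SigA /\ ~ NA.
Definition entrance_a := ~ SigA /\ NA.
Definition natural_a := ~ SigA /\ ~ NA.
Definition regular_b := SigB /\ NB.
Definition exit_b := SigB /\ ~ NB.
Definition entrance_b := ~ SigB /\ NB.
Definition natural_b := ~ SigB /\ ~ NB.
Definition attainable_a := regular_a \/ exit_a.

Definition inE (p : R) : Prop :=
  inI p \/ (a = Some p /\ attainable_a) \/ (b = Some p /\ entrance_b).
Definition inRbar (y z : R) : Prop := inE y /\ inE z /\ y <= z.
Definition inRr (y z : R) : Prop := inE y /\ inE z /\ y < z.

Definition setting : Prop :=
  (match a, b with Some a', Some b' => a' < b' | _, _ => True end) /\
  inI x0 /\
  (forall x, inI x -> continuity_pt mu x /\ continuity_pt sigma x /\ sigma x <> 0).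

(* refl : a is a regular boundary with reflecting boundary behaviour *)
Variable refl : Prop.

Definition condA : Prop :=
  (forall x, inI x -> Ia_fin sdens x) /\
  (forall x, inI x -> ~ Ib_fin sdens x) /\
  (refl -> regular_a /\ exists L, lim_a (fun x => sdens x * Ib mdens x) L) /\
  (natural_b -> forall y, inI y -> Ib_fin mdens y) /\
  (a = None -> natural_a) /\ (b = None -> natural_b).

Variables (c0 : R -> R) (c0a c0b : Rbar) (c1 : R -> R -> Rbar) (k1 : R).

Definition condB : Prop :=
  (forall x, inE x -> 0 <= c0 x) /\
  (forall p, inE p -> limit1_in c0 inE (c0 p) p) /\
  (natural_a -> lim_a_bar c0 c0a) /\ (natural_b -> lim_b_bar c0 c0b) /\
  (a = None -> c0a = PInf) /\ (b = None -> c0b = PInf) /\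
  (forall y, inI y -> Ib_fin (fun v => c0 v * mdens v) y) /\
  (refl -> exists L, lim_a (fun x => sdens x * Ib (fun v => c0 v * mdens v) x) L) /\
  0 < k1 /\
  (forall y z, inRbar y z -> Rbar_le (Fin k1) (c1 y z)) /\
  (forall y z, inRbar y z ->
     match c1 y z with
     | Fin r => forall eps, 0 < eps -> exists del, 0 < del /\
          forall y' z', inRbar y' z' -> Rabs (y' - y) < del -> Rabs (z' - z) < del ->
            exists r', c1 y' z' = Fin r' /\ Rabs (r' - r) < eps
     | PInf => forall K, exists del, 0 < del /\
          forall y' z', inRbar y' z' -> Rabs (y' - y) < del -> Rabs (z' - z) < del ->
            Rbar_lt (Fin K) (c1 y' z')
     end) /\
  (forall z, inE z -> a <> Some z ->
     exists w, gtA w /\ w <= z /\ exists d : R -> R,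
       forall y, gtA y -> y < w ->
         (exists r, c1 y z = Fin r) /\
         derivable_pt_lim (fun t => Rbar_real (c1 t z)) y (d y) /\ continuity_pt d y) /\
  (forall y, inE y -> b <> Some y ->
     exists w, ltB w /\ y <= w /\ exists d : R -> R,
       forall z, w < z -> ltB z ->
         (exists r, c1 y z = Fin r) /\
         derivable_pt_lim (fun t => Rbar_real (c1 y t)) z (d z) /\ continuity_pt d z).

Definition g0 (x : R) : R :=
  Rint (fun u => Ib (fun v => 2 * c0 v * mdens v) u * sdens u) x0 x.
Definition zeta (x : R) : R :=
  Rint (fun u => 2 * Ib mdens u * sdens u) x0 x.

Definition extv (f : R -> R) (p : R) : R :=
  match excluded_middle_informative (inI p) with
  | left _ => f p
  | right _ => epsilon (inhabits 0) (fun L => limit1_in f inI L p)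
  end.

Definition F0 (y z : R) : Rbar :=
  match Rlt_dec y z with
  | left _ =>
      match c1 y z with
      | Fin c => Fin ((c + extv g0 z - extv g0 y) / (extv zeta z - extv zeta y))
      | PInf => PInf
      end
  | right _ => PInf
  end.

Definition condC : Prop :=
  ((regular_a \/ exit_a) \/
   (natural_a /\
    (c0a = PInf \/
     exists c, c0a = Fin c /\
       (forall z, inE z -> exists yz, gtA yz /\
          forall y, gtA y -> y < yz -> y < z ->
            exists dc dg dz,
              derivable_pt_lim (fun t => Rbar_real (c1 t z)) y dc /\
              derivable_pt_lim g0 y dg /\ derivable_pt_lim zeta y dz /\
              Rbar_lt (F0 y z) (Fin ((- dc + dg) / dz))) /\
       exists yh zh, inRr yh zh /\ Rbar_lt (F0 yh zh) (Fin c)))) /\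
  (entrance_b \/
   (natural_b /\
    (c0b = PInf \/
     exists c, c0b = Fin c /\
       (forall y, inE y -> exists zy, ltB zy /\
          forall z, zy < z -> ltB z -> y < z ->
            exists dc dg dz,
              derivable_pt_lim (fun t => Rbar_real (c1 y t)) z dc /\
              derivable_pt_lim g0 z dg /\ derivable_pt_lim zeta z dz /\
              Rbar_lt (F0 y z) (Fin ((dc + dg) / dz))) /\
       exists yt zt, inRr yt zt /\ Rbar_lt (F0 yt zt) (Fin c)))).

End Setting.

(* F0 is positive and lower semicontinuous on {(y, z) in E^2 : y <= z}: zeta is strictly
   increasing and g0 nondecreasing, both continuous on E (they have finite limits at an
   attainable a or an entrance b), c1 >= k1 > 0 is continuous, and F0 tends to +oo at the
   diagonal.
   Near a natural boundary F0 exceeds every level T below the limit of c0 there: zeta tends to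
   -oo at a natural a (resp. +oo at a natural b), and since M[y, b) -> +oo as well, g0 grows at
   least K times as fast as zeta for any K below c0(a), up to a bounded error.  Condition C
   provides a pair where F0 is below c0 at both natural boundaries, so a nonempty sublevel set
   {F0 <= T} is confined to a compact box [al, de] inside E, where a lower semicontinuous
   function attains its minimum; the minimiser is off the diagonal since F0 is finite there. *)

From Coquelicot Require Import Coquelicot.
From Stdlib Require Import Reals Lra Lia ClassicalEpsilon Classical FunctionalExtensionality.
Open Scope R_scope.

(** * Minimisation on compact sublevel sets *)

Lemma inv_succ_pos n : 0 < / (INR n + 1).
Proof. apply Rinv_0_lt_compat. pose proof (pos_INR n). lra. Qed.

Lemma inv_succ_lt eps : 0 < eps -> exists N : nat, forall n, (N <= n)%nat -> / (INR n + 1) < eps.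
Proof.
  intros He. destruct (archimed_cor1 eps He) as [N [HN HN0]].
  exists N. intros n Hn.
  apply Rle_lt_trans with (/ INR N); [|exact HN].
  apply Rinv_le_contravar; [apply lt_0_INR; exact HN0|].
  apply le_INR in Hn. lra.
Qed.

Lemma inf_approx (P : R -> Prop) B : (exists r, P r) -> (forall r, P r -> B <= r) ->
  exists m, (forall r, P r -> m <= r) /\ forall e, 0 < e -> exists r, P r /\ r < m + e.
Proof.
  intros [r0 Hr0] HB.
  destruct (completeness (fun x => P (- x))) as [L [HL1 HL2]].
  - exists (- B). intros x Hx. specialize (HB _ Hx). lra.
  - exists (- r0). rewrite Ropp_involutive. exact Hr0.
  - exists (- L). split.
    + intros r Hr. assert (H : P (- - r)) by (rewrite Ropp_involutive; exact Hr).
      apply HL1 in H. lra.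
    + intros e He. apply NNPP. intros Hn.
      assert (Hub : is_upper_bound (fun x => P (- x)) (L - e)).
      { intros x Hx. apply Rnot_lt_le. intros Hlt. apply Hn. exists (- x). split; [exact Hx|lra]. }
      apply HL2 in Hub. lra.
Qed.

Lemma cluster_le (u v : nat -> R) lu lv : (forall n, u n <= v n) ->
  (forall e, 0 < e -> exists n, Rabs (u n - lu) < e /\ Rabs (v n - lv) < e) -> lu <= lv.
Proof.
  intros Huv Hc. apply Rnot_lt_le. intros Hlt.
  destruct (Hc ((lu - lv) / 2)) as [n [H1 H2]]; [lra|].
  apply Rabs_def2 in H1. apply Rabs_def2 in H2. specialize (Huv n). lra.
Qed.

Lemma cluster_bounds (u : nat -> R) l alpha delta : (forall n, alpha <= u n <= delta) ->
  (forall e, 0 < e -> exists n, Rabs (u n - l) < e) -> alpha <= l <= delta.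
Proof.
  intros Hb Hc. split.
  - apply (cluster_le (fun _ => alpha) u); [intros n; apply Hb|].
    intros e He. destruct (Hc e He) as [n Hn]. exists n.
    rewrite Rminus_diag, Rabs_R0. auto.
  - apply (cluster_le u (fun _ => delta)); [intros n; apply Hb|].
    intros e He. destruct (Hc e He) as [n Hn]. exists n.
    rewrite Rminus_diag, Rabs_R0. auto.
Qed.

Lemma bolzano_weierstrass_pair (u v : nat -> R) alpha delta :
  (forall n, alpha <= u n <= delta /\ alpha <= v n <= delta) ->
  exists lu lv, alpha <= lu <= delta /\ alpha <= lv <= delta /\
    forall e N, 0 < e -> exists n, (N <= n)%nat /\ Rabs (u n - lu) < e /\ Rabs (v n - lv) < e.
Proof.
  intros Hb.
  assert (Hadh : forall w l, ValAdh w l -> forall e N, 0 < e ->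
            exists p, (N <= p)%nat /\ Rabs (w p - l) < e).
  { intros w l H e N He. destruct (H (fun x => Rabs (x - l) < e) N) as [p Hp].
    - exists (mkposreal e He). intros x Hx. exact Hx.
    - exists p; exact Hp. }
  destruct (Bolzano_Weierstrass u (fun c => alpha <= c <= delta) (compact_P3 alpha delta))
    as [lu Hlu]; [intros n; apply Hb|].
  destruct (ClassicalEpsilon.choice (fun k p => (k <= p)%nat /\ Rabs (u p - lu) < / (INR k + 1)))
    as [phi Hphi].
  { intros k. apply Hadh; [exact Hlu|apply inv_succ_pos]. }
  destruct (Bolzano_Weierstrass (fun k => v (phi k)) (fun c => alpha <= c <= delta)
              (compact_P3 alpha delta)) as [lv Hlv]; [intros k; apply Hb|].
  assert (Hpair : forall e N, 0 < e ->
            exists n, (N <= n)%nat /\ Rabs (u n - lu) < e /\ Rabs (v n - lv) < e).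
  { intros e N He. destruct (inv_succ_lt e He) as [N1 HN1].
    destruct (Hadh _ _ Hlv e (max N N1) He) as [k [Hk1 Hk2]].
    destruct (Hphi k) as [P1 P2]. exists (phi k). split; [lia|split; [|exact Hk2]].
    apply Rlt_trans with (/ (INR k + 1)); [exact P2|apply HN1; lia]. }
  exists lu, lv. split; [|split; [|exact Hpair]].
  - apply (cluster_bounds u); [intros n; apply Hb|].
    intros e He. destruct (Hpair e 0%nat He) as [n [_ [H _]]]. eauto.
  - apply (cluster_bounds v); [intros n; apply Hb|].
    intros e He. destruct (Hpair e 0%nat He) as [n [_ [_ H]]]. eauto.
Qed.

Section SublevelMinimum.
Variables (E : R -> Prop) (F : R -> R -> Rbar) (T alpha delta : R).
Let D y z := E y /\ E z /\ y <= z.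
Let S r := exists y z, D y z /\ F y z = Fin r /\ r <= T.
Hypothesis Hbox : forall x, alpha <= x <= delta -> E x.
Hypothesis Hsub : forall y z, D y z -> Rbar_le (F y z) (Fin T) -> alpha <= y /\ z <= delta.
Hypothesis Hpos : forall y z r, D y z -> F y z = Fin r -> 0 <= r.
Hypothesis Hlsc : forall y z, D y z -> alpha <= y -> z <= delta ->
  forall t, Rbar_lt (Fin t) (F y z) -> exists e, 0 < e /\ forall y' z', D y' z' ->
    Rabs (y' - y) < e -> Rabs (z' - z) < e -> Rbar_lt (Fin t) (F y' z').
Hypothesis Hwit : exists y z, D y z /\ Rbar_le (F y z) (Fin T).

Lemma sublevel_inf_attained m : (forall r, S r -> m <= r) ->
  (forall e, 0 < e -> exists r, S r /\ r < m + e) ->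
  exists y z, D y z /\ Rbar_le (F y z) (Fin m).
Proof.
  intros Hm_low Hm_approx.
  destruct (ClassicalEpsilon.choice (fun (n : nat) (p : R * R) => exists r,
              D (fst p) (snd p) /\ F (fst p) (snd p) = Fin r /\ r <= T /\ r < m + / (INR n + 1)))
    as [p Hp].
  { intros n. destruct (Hm_approx _ (inv_succ_pos n)) as [r [(y & z & H1 & H2 & H3) H4]].
    exists (y, z), r. auto. }
  set (yn n := fst (p n)). set (zn n := snd (p n)).
  assert (Hyz_box : forall n, alpha <= yn n <= delta /\ alpha <= zn n <= delta).
  { intros n. destruct (Hp n) as [r [Dn [Fn [Hr _]]]].
    destruct (Hsub _ _ Dn) as [A1 A2]; [rewrite Fn; exact Hr|].
    destruct Dn as [_ [_ Hle]]. unfold yn, zn. lra. }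
  destruct (bolzano_weierstrass_pair yn zn alpha delta Hyz_box) as [ly [lz [Hly [Hlz Hcl]]]].
  assert (Dl : D ly lz).
  { split; [apply Hbox; lra|split; [apply Hbox; lra|]].
    apply (cluster_le yn zn); [intros n; destruct (Hp n) as [r [[_ [_ H]] _]]; exact H|].
    intros e He. destruct (Hcl e 0%nat He) as [n [_ H]]. eauto. }
  exists ly, lz. split; [exact Dl|].
  apply NNPP. intros Hgt.
  assert (exists t, m < t /\ Rbar_lt (Fin t) (F ly lz)) as [t [Ht1 Ht2]].
  { destruct (F ly lz) as [r|]; simpl in *; [exists ((r + m) / 2)|exists (m + 1)]; lra. }
  destruct (Hlsc _ _ Dl (proj1 Hly) (proj2 Hlz) t Ht2) as [e [He Hnear]].
  destruct (inv_succ_lt (t - m)) as [N HN]; [lra|].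
  destruct (Hcl e N He) as [n [HNn [H1 H2]]].
  destruct (Hp n) as [r [Dn [Fn [_ Hr]]]].
  specialize (Hnear _ _ Dn H1 H2). fold yn zn in Fn. rewrite Fn in Hnear. simpl in Hnear.
  specialize (HN _ HNn). lra.
Qed.

Lemma sublevel_attains_min : exists y0 z0, D y0 z0 /\ forall y z, D y z -> Rbar_le (F y0 z0) (F y z).
Proof.
  destruct Hwit as (yw & zw & Dw & Hw).
  destruct (F yw zw) as [rw|] eqn:Erw; [simpl in Hw|contradiction].
  assert (Sw : S rw) by (exists yw, zw; auto).
  destruct (inf_approx S 0) as [m [Hm_low Hm_approx]]; [exists rw; exact Sw|..].
  { intros r (y & z & Dyz & Er & _). exact (Hpos y z r Dyz Er). }
  destruct (sublevel_inf_attained m Hm_low Hm_approx) as (y0 & z0 & D0 & Hle).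
  exists y0, z0. split; [exact D0|]. intros y z Dyz.
  pose proof (Hm_low rw Sw).
  destruct (F y0 z0) as [r0|]; [|contradiction]. simpl in Hle.
  destruct (F y z) as [r|] eqn:Er; [simpl|exact I].
  destruct (Rle_dec r T) as [HrT|HrT]; [|lra].
  assert (m <= r) by (apply Hm_low; exists y, z; auto). lra.
Qed.
End SublevelMinimum.

Lemma Rint_RInt f x y : ex_RInt f x y -> Rint f x y = RInt f x y.
Proof.
  intros H. unfold Rint.
  destruct excluded_middle_informative as [h|h].
  - rewrite (RInt_Reals f x y (epsilon h (fun _ => True))). reflexivity.
  - exfalso. apply h. constructor. apply ex_RInt_Reals_0. exact H.
Qed.

Lemma RInt_point_R (f : R -> R) y : RInt f y y = 0.
Proof. exact (@RInt_point R_CompleteNormedModule y f). Qed.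

Lemma RInt_const_R y z c : RInt (fun _ => c) y z = (z - y) * c.
Proof. rewrite RInt_const. reflexivity. Qed.

Lemma RInt_scal_R (f : R -> R) y z k :
  ex_RInt f y z -> RInt (fun u => k * f u) y z = k * RInt f y z.
Proof. intros H. exact (@RInt_scal R_CompleteNormedModule f y z k H). Qed.

Lemma RInt_Chasles_R (f : R -> R) y x z :
  ex_RInt f y x -> ex_RInt f x z -> RInt f y x + RInt f x z = RInt f y z.
Proof. intros H1 H2. exact (@RInt_Chasles R_CompleteNormedModule f y x z H1 H2). Qed.

Lemma RInt_plus_R (f g : R -> R) y z : ex_RInt f y z -> ex_RInt g y z ->
  RInt (fun u => f u + g u) y z = RInt f y z + RInt g y z.
Proof. intros H1 H2. exact (@RInt_plus R_CompleteNormedModule f g y z H1 H2). Qed.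

Lemma continuous_scal_R k (f : R -> R) t : continuous f t -> continuous (fun u => k * f u) t.
Proof. intros H. apply (continuous_mult (fun _ => k) f); [apply continuous_const|exact H]. Qed.

Lemma Rbar_lt_le_trans r r' c : Rbar_lt (Fin r) c -> r' <= r -> Rbar_lt (Fin r') c.
Proof. destruct c; simpl; auto. lra. Qed.

Lemma Rbar_lt_gap r c : Rbar_lt (Fin r) c -> exists t, r < t /\ Rbar_lt (Fin t) c.
Proof.
  destruct c as [c|]; simpl; intros H.
  - exists ((r + c) / 2). simpl. lra.
  - exists (r + 1). simpl. lra.
Qed.

Lemma Rabs_affine_lt v L c k eps : 0 < eps ->
  Rabs (v - L) < eps / (Rabs k + 1) -> Rabs (c + k * v - (c + k * L)) < eps.
Proof.
  intros He Hv.
  replace (c + k * v - (c + k * L)) with (k * (v - L)) by ring. rewrite Rabs_mult.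
  pose proof (Rabs_pos k). pose proof (Rabs_pos (v - L)).
  apply Rle_lt_trans with ((Rabs k + 1) * Rabs (v - L)); [nra|].
  apply Rmult_lt_compat_l with (r := Rabs k + 1) in Hv; [|lra].
  replace ((Rabs k + 1) * (eps / (Rabs k + 1))) with eps in Hv by (field; lra). exact Hv.
Qed.

Lemma limit1_in_sub (h : R -> R) (P : R -> Prop) y z :
  limit1_in h P (h y) y -> limit1_in h P (h z) z -> forall eps, 0 < eps ->
  exists d, 0 < d /\ forall y' z', P y' -> P z' -> Rabs (y' - y) < d -> Rabs (z' - z) < d ->
    Rabs ((h z' - h y') - (h z - h y)) < eps.
Proof.
  intros Hy Hz eps He.
  destruct (Hy (eps / 2)) as [dy [Hdy Hy']]; [lra|].
  destruct (Hz (eps / 2)) as [dz [Hdz Hz']]; [lra|].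
  exists (Rmin dy dz). split; [apply Rmin_glb_lt; lra|].
  intros y' z' Py Pz Hyy Hzz. pose proof (Rmin_l dy dz). pose proof (Rmin_r dy dz).
  assert (A : Rabs (h y' - h y) < eps / 2)
    by (apply (Hy' y'); split; [exact Py|change (Rabs (y' - y) < dy); lra]).
  assert (B : Rabs (h z' - h z) < eps / 2)
    by (apply (Hz' z'); split; [exact Pz|change (Rabs (z' - z) < dz); lra]).
  apply Rabs_def2 in A. apply Rabs_def2 in B.
  apply Rabs_def1; lra.
Qed.

Lemma slope_bound_lt T K C c D N : 0 < c -> K * (D - C) <= N -> K * C <= (K - T) * D ->
  T * D < c + N.
Proof. intros. lra. Qed.

Lemma Rbar_lt_common_gap (P Q : Prop) r ca cb :
  (P -> Rbar_lt (Fin r) ca) -> (Q -> Rbar_lt (Fin r) cb) ->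
  exists T, r < T /\ (P -> Rbar_lt (Fin T) ca) /\ (Q -> Rbar_lt (Fin T) cb).
Proof.
  intros Ha Hb.
  assert (Hgap : forall (A : Prop) c, (A -> Rbar_lt (Fin r) c) ->
            exists e, 0 < e /\ (A -> Rbar_lt (Fin (r + e)) c)).
  { intros A c Hc. destruct (classic A) as [HA|HA]; [|exists 1; split; [lra|tauto]].
    destruct (Rbar_lt_gap r c (Hc HA)) as [t [Hrt Ht]].
    exists (t - r). split; [lra|]. intros _. replace (r + (t - r)) with t by ring. exact Ht. }
  destruct (Hgap P ca Ha) as [ea [Hea Ha']]. destruct (Hgap Q cb Hb) as [eb [Heb Hb']].
  exists (r + Rmin ea eb). pose proof (Rmin_l ea eb). pose proof (Rmin_r ea eb).
  split; [pose proof (Rmin_glb_lt ea eb 0 Hea Heb); lra|].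
  split; intros HPQ; eapply Rbar_lt_le_trans; [apply Ha'; auto| |apply Hb'; auto|]; lra.
Qed.

(** * Limits and integrals on the open interval *)

Section Interval.
Context {a b : option R}.
Local Notation I := (inI a b).

Lemma gtA_mono x y : gtA a x -> x <= y -> gtA a y.
Proof. unfold gtA; intros H1 H2; destruct a; auto; lra. Qed.

Lemma ltB_mono x y : ltB b x -> y <= x -> ltB b y.
Proof. unfold ltB; intros H1 H2; destruct b; auto; lra. Qed.

Lemma inI_between x y t : I x -> I y -> x <= t <= y -> I t.
Proof.
  intros [H1 H2] [H3 H4] H.
  split; [apply (gtA_mono x)|apply (ltB_mono y)]; auto; lra.
Qed.

Lemma inI_segment y z t : I y -> I z -> Rmin y z <= t <= Rmax y z -> I t.
Proof.
  intros Hy Hz Ht. destruct (Rle_dec y z).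
  - rewrite Rmin_left, Rmax_right in Ht by lra. apply (inI_between y z); auto.
  - rewrite Rmin_right, Rmax_left in Ht by lra. apply (inI_between z y); auto.
Qed.

Lemma inI_Rmin x y : I x -> I y -> I (Rmin x y).
Proof. intros; destruct (Rle_dec x y); [rewrite Rmin_left|rewrite Rmin_right]; auto; lra. Qed.

Lemma inI_Rmax x y : I x -> I y -> I (Rmax x y).
Proof. intros; destruct (Rle_dec x y); [rewrite Rmax_right|rewrite Rmax_left]; auto; lra. Qed.

Lemma inI_open x : I x -> exists d, 0 < d /\ forall y, Rabs (y - x) < d -> I y.
Proof.
  intros [H1 H2]. unfold gtA, ltB in *.
  destruct a as [a'|], b as [b'|].
  - exists (Rmin (x - a') (b' - x)). split; [apply Rmin_glb_lt; lra|].
    intros y Hy. apply Rabs_def2 in Hy.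
    pose proof (Rmin_l (x - a') (b' - x)). pose proof (Rmin_r (x - a') (b' - x)).
    split; unfold gtA, ltB; lra.
  - exists (x - a'). split; [lra|].
    intros y Hy. apply Rabs_def2 in Hy. split; unfold gtA, ltB; auto; lra.
  - exists (b' - x). split; [lra|].
    intros y Hy. apply Rabs_def2 in Hy. split; unfold gtA, ltB; auto; lra.
  - exists 1. split; [lra|]. intros; split; unfold gtA, ltB; auto.
Qed.

Lemma inI_locally x : I x -> locally x I.
Proof.
  intros Hx. destruct (inI_open x Hx) as [d [Hd H]].
  exists (mkposreal d Hd). intros y Hy. apply H. exact Hy.
Qed.

Lemma near_b_exists_gt P v : near_b a b P -> I v -> exists x, I x /\ v < x /\ P x.
Proof.
  intros [w [Hw H]] Hv. set (u := Rmax v w).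
  assert (Hvu : v <= u /\ w <= u) by (split; [apply Rmax_l|apply Rmax_r]).
  destruct (inI_Rmax v w Hv Hw) as [Iu1 Iu2]. fold u in Iu1, Iu2. unfold ltB in Iu2.
  destruct b as [b'|] eqn:Eb; [exists ((u + b') / 2)|exists (u + 1)];
    (split; [split; [apply (gtA_mono u); auto; lra|unfold ltB; auto; lra]|]);
    (split; [lra|apply H; [lra|unfold ltB; auto; lra]]).
Qed.

Lemma near_b_and P Q : near_b a b P -> near_b a b Q -> near_b a b (fun x => P x /\ Q x).
Proof.
  intros [w1 [H1 P1]] [w2 [H2 P2]]. exists (Rmax w1 w2). split; [apply inI_Rmax; auto|].
  intros x Hx Hb. pose proof (Rmax_l w1 w2); pose proof (Rmax_r w1 w2).
  split; [apply P1|apply P2]; auto; lra.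
Qed.

Lemma near_b_impl (P Q : R -> Prop) : (forall x, I x -> P x -> Q x) -> near_b a b P -> near_b a b Q.
Proof.
  intros HPQ [w [Hw H]]. exists w; split; auto. intros x H1 H2. apply HPQ; auto.
  split; auto. apply (gtA_mono w); [apply Hw|lra].
Qed.

Lemma near_b_ge v : I v -> near_b a b (fun x => v <= x).
Proof. intros H. exists v. split; auto. intros; lra. Qed.

Lemma near_a_exists_lt P v : near_a a b P -> I v -> exists x, I x /\ x < v /\ P x.
Proof.
  intros [w [Hw H]] Hv. set (u := Rmin v w).
  assert (Hvu : u <= v /\ u <= w) by (split; [apply Rmin_l|apply Rmin_r]).
  destruct (inI_Rmin v w Hv Hw) as [Iu1 Iu2]. fold u in Iu1, Iu2. unfold gtA in Iu1.
  destruct a as [a'|] eqn:Ea; [exists ((u + a') / 2)|exists (u - 1)];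
    (split; [split; [unfold gtA; auto; lra|apply (ltB_mono u); auto; lra]|]);
    (split; [lra|apply H; [unfold gtA; auto; lra|lra]]).
Qed.

Lemma near_a_and P Q : near_a a b P -> near_a a b Q -> near_a a b (fun x => P x /\ Q x).
Proof.
  intros [w1 [H1 P1]] [w2 [H2 P2]]. exists (Rmin w1 w2). split; [apply inI_Rmin; auto|].
  intros x Hx Hb. pose proof (Rmin_l w1 w2); pose proof (Rmin_r w1 w2).
  split; [apply P1|apply P2]; auto; lra.
Qed.

Lemma near_a_impl (P Q : R -> Prop) : (forall x, I x -> P x -> Q x) -> near_a a b P -> near_a a b Q.
Proof.
  intros HPQ [w [Hw H]]. exists w; split; auto. intros x H1 H2. apply HPQ; auto.
  split; auto. apply (ltB_mono w); [apply Hw|lra].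
Qed.

Lemma near_a_le v : I v -> near_a a b (fun x => x <= v).
Proof. intros H. exists v. split; auto. intros; lra. Qed.

Lemma lim_b_unique f L1 L2 : lim_b a b f L1 -> lim_b a b f L2 -> L1 = L2.
Proof.
  intros H1 H2. apply NNPP; intros Hn.
  assert (He : 0 < Rabs (L1 - L2) / 2).
  { assert (L1 - L2 <> 0) by (intro; apply Hn; lra). pose proof (Rabs_pos_lt _ H). lra. }
  destruct (near_b_and _ _ (H1 _ He) (H2 _ He)) as [w [Hw Hx]].
  destruct (near_b_exists_gt _ w (ex_intro _ w (conj Hw Hx)) Hw) as [x [_ [_ [A B]]]].
  assert (Rabs (L1 - L2) <= Rabs (f x - L1) + Rabs (f x - L2)).
  { replace (L1 - L2) with (- (f x - L1) + (f x - L2)) by ring.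
    eapply Rle_trans; [apply Rabs_triang|]. rewrite Rabs_Ropp. lra. }
  lra.
Qed.

Lemma lim_b_le f g L1 L2 :
  lim_b a b f L1 -> lim_b a b g L2 -> near_b a b (fun x => f x <= g x) -> L1 <= L2.
Proof.
  intros H1 H2 H3. apply Rnot_lt_le; intros Hn.
  assert (He : 0 < (L1 - L2) / 2) by lra.
  destruct (near_b_and _ _ (near_b_and _ _ (H1 _ He) (H2 _ He)) H3) as [w [Hw Hx]].
  destruct (near_b_exists_gt _ w (ex_intro _ w (conj Hw Hx)) Hw) as [x [_ [_ [[A B] C]]]].
  apply Rabs_def2 in A; apply Rabs_def2 in B. lra.
Qed.

Lemma lim_b_ext f g L : near_b a b (fun x => f x = g x) -> (lim_b a b f L <-> lim_b a b g L).
Proof.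
  intros He. split; intros Hf eps Heps.
  - apply (near_b_impl (fun x => f x = g x /\ Rabs (f x - L) < eps)).
    + intros x _ [A B]. rewrite <- A; exact B.
    + apply near_b_and; auto.
  - apply (near_b_impl (fun x => f x = g x /\ Rabs (g x - L) < eps)).
    + intros x _ [A B]. rewrite A; exact B.
    + apply near_b_and; auto.
Qed.

Lemma lim_b_const c p : I p -> lim_b a b (fun _ => c) c.
Proof. intros Hp eps He. exists p. split; auto. intros. rewrite Rminus_diag, Rabs_R0. exact He. Qed.

Lemma lim_b_affine f L c k : lim_b a b f L -> lim_b a b (fun x => c + k * f x) (c + k * L).
Proof.
  intros H eps He.
  assert (He' : 0 < eps / (Rabs k + 1)).
  { apply Rdiv_lt_0_compat; [lra|]. pose proof (Rabs_pos k); lra. }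
  apply (near_b_impl _ _ (fun x _ => Rabs_affine_lt (f x) L c k eps He) (H _ He')).
Qed.

Lemma lim_b_limit1_in f L b' : b = Some b' -> lim_b a b f L -> limit1_in f I L b'.
Proof.
  intros Eb H eps He. destruct (H eps He) as [w [[Hw1 Hw2] Hw]].
  unfold ltB in Hw2; rewrite Eb in Hw2.
  exists (b' - w). split; [lra|]. intros x [[Ix1 Ix2] Hd]. simpl in Hd |- *. unfold R_dist in *.
  unfold ltB in Ix2; rewrite Eb in Ix2. apply Rabs_def2 in Hd.
  apply Hw; [lra|unfold ltB; rewrite Eb; auto].
Qed.

Section MonotoneNearB.
Variables (f : R -> R) (w0 : R).
Hypothesis Hw0 : I w0.
Hypothesis Hmono : forall x y, I x -> I y -> w0 <= x <= y -> f x <= f y.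

Lemma monotone_bounded_lim_b B : (forall x, I x -> w0 <= x -> f x <= B) ->
  exists L, lim_b a b f L /\ (forall x, I x -> w0 <= x -> f x <= L).
Proof.
  intros HB.
  set (S r := exists x, I x /\ w0 <= x /\ r = f x).
  destruct (completeness S) as [L [HL1 HL2]].
  { exists B; intros r [x [H1 [H2 ->]]]; auto. }
  { exists (f w0), w0. split; [exact Hw0|split; [lra|reflexivity]]. }
  assert (Hup : forall x, I x -> w0 <= x -> f x <= L) by (intros x H1 H2; apply HL1; exists x; auto).
  exists L. split; auto.
  intros eps He.
  assert (exists x, I x /\ w0 <= x /\ L - eps < f x) as [x1 [I1 [W1 F1]]].
  { apply NNPP; intros Hn. assert (is_upper_bound S (L - eps)).
    { intros r [x [H1 [H2 ->]]]. apply Rnot_lt_le; intros Hc. apply Hn. exists x; auto. }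
    apply HL2 in H. lra. }
  exists x1. split; auto. intros x Hx1 Hx2.
  assert (Ix : I x) by (split; auto; apply (gtA_mono x1); [apply I1|lra]).
  pose proof (Hmono x1 x I1 Ix ltac:(lra)). pose proof (Hup x Ix ltac:(lra)).
  apply Rabs_def1; lra.
Qed.

Lemma monotone_unbounded_b : ~ (exists L, lim_b a b f L) ->
  forall K, exists w, I w /\ w0 <= w /\ forall x, I x -> w <= x -> K < f x.
Proof.
  intros Hn K. apply NNPP; intros Hc. apply Hn.
  destruct (monotone_bounded_lim_b K) as [L [HL _]]; [|exists L; auto].
  intros x Ix Hx. apply Rnot_lt_le; intros Hlt. apply Hc.
  exists x. split; [exact Ix|split; [exact Hx|]].
  intros y Iy Hy. pose proof (Hmono x y Ix Iy ltac:(lra)). lra.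
Qed.

Lemma monotone_le_lim_b L : lim_b a b f L -> forall x, I x -> w0 <= x -> f x <= L.
Proof.
  intros HL x Ix Hx. apply Rnot_lt_le; intros Hc.
  assert (He : 0 < f x - L) by lra.
  destruct (near_b_and _ _ (HL _ He) (near_b_ge x Ix)) as [w [Hw Hp]].
  destruct (near_b_exists_gt _ w (ex_intro _ w (conj Hw Hp)) Hw) as [t [It [_ [A B]]]].
  pose proof (Hmono x t Ix It ltac:(lra)). apply Rabs_def2 in A. lra.
Qed.
End MonotoneNearB.

Lemma lim_a_ext f g L : near_a a b (fun x => f x = g x) -> (lim_a a b f L <-> lim_a a b g L).
Proof.
  intros He. split; intros Hf eps Heps.
  - apply (near_a_impl (fun x => f x = g x /\ Rabs (f x - L) < eps)).
    + intros x _ [A B]. rewrite <- A; exact B.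
    + apply near_a_and; auto.
  - apply (near_a_impl (fun x => f x = g x /\ Rabs (g x - L) < eps)).
    + intros x _ [A B]. rewrite A; exact B.
    + apply near_a_and; auto.
Qed.

Lemma lim_a_affine f L c k : lim_a a b f L -> lim_a a b (fun x => c + k * f x) (c + k * L).
Proof.
  intros H eps He.
  assert (He' : 0 < eps / (Rabs k + 1)).
  { apply Rdiv_lt_0_compat; [lra|]. pose proof (Rabs_pos k); lra. }
  apply (near_a_impl _ _ (fun x _ => Rabs_affine_lt (f x) L c k eps He) (H _ He')).
Qed.

Lemma lim_a_limit1_in f L a' : a = Some a' -> lim_a a b f L -> limit1_in f I L a'.
Proof.
  intros Ea H eps He. destruct (H eps He) as [w [[Hw1 Hw2] Hw]].
  unfold gtA in Hw1; rewrite Ea in Hw1.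
  exists (w - a'). split; [lra|]. intros x [[Ix1 Ix2] Hd]. simpl in Hd |- *. unfold R_dist in *.
  unfold gtA in Ix1; rewrite Ea in Ix1. apply Rabs_def2 in Hd.
  apply Hw; [unfold gtA; rewrite Ea; auto|lra].
Qed.

Section MonotoneNearA.
Variables (f : R -> R) (w0 : R).
Hypothesis Hw0 : I w0.
Hypothesis Hmono : forall x y, I x -> I y -> x <= y <= w0 -> f x <= f y.

Lemma monotone_bounded_lim_a B : (forall x, I x -> x <= w0 -> B <= f x) ->
  exists L, lim_a a b f L /\ (forall x, I x -> x <= w0 -> L <= f x).
Proof.
  intros HB.
  set (S r := exists x, I x /\ x <= w0 /\ r = - f x).
  destruct (completeness S) as [L [HL1 HL2]].
  { exists (- B); intros r [x [H1 [H2 ->]]]. specialize (HB x H1 H2). lra. }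
  { exists (- f w0), w0. split; [exact Hw0|split; [lra|reflexivity]]. }
  assert (Hlow : forall x, I x -> x <= w0 -> - L <= f x).
  { intros x H1 H2. assert (S (- f x)) by (exists x; auto). apply HL1 in H. lra. }
  exists (- L). split; auto.
  intros eps He.
  assert (exists x, I x /\ x <= w0 /\ f x < - L + eps) as [x1 [I1 [W1 F1]]].
  { apply NNPP; intros Hn. assert (is_upper_bound S (L - eps)).
    { intros r [x [H1 [H2 ->]]]. apply Rnot_lt_le; intros Hc. apply Hn.
      exists x; split; [exact H1|split; [exact H2|lra]]. }
    apply HL2 in H. lra. }
  exists x1. split; auto. intros x Hx1 Hx2.
  assert (Ix : I x) by (split; auto; apply (ltB_mono x1); [apply I1|lra]).
  pose proof (Hmono x x1 Ix I1 ltac:(lra)). pose proof (Hlow x Ix ltac:(lra)).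
  apply Rabs_def1; lra.
Qed.

Lemma monotone_unbounded_a : ~ (exists L, lim_a a b f L) ->
  forall K, exists w, I w /\ w <= w0 /\ forall x, I x -> x <= w -> f x < K.
Proof.
  intros Hn K. apply NNPP; intros Hc. apply Hn.
  destruct (monotone_bounded_lim_a K) as [L [HL _]]; [|exists L; auto].
  intros x Ix Hx. apply Rnot_lt_le; intros Hlt. apply Hc.
  exists x. split; [exact Ix|split; [exact Hx|]].
  intros y Iy Hy. pose proof (Hmono y x Iy Ix ltac:(lra)). lra.
Qed.

Lemma monotone_ge_lim_a L : lim_a a b f L -> forall x, I x -> x <= w0 -> L <= f x.
Proof.
  intros HL x Ix Hx. apply Rnot_lt_le; intros Hc.
  assert (He : 0 < L - f x) by lra.
  destruct (near_a_and _ _ (HL _ He) (near_a_le x Ix)) as [w [Hw Hp]].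
  destruct (near_a_exists_lt _ w (ex_intro _ w (conj Hw Hp)) Hw) as [t [It [_ [A B]]]].
  pose proof (Hmono t x It Ix ltac:(lra)). apply Rabs_def2 in A. lra.
Qed.
End MonotoneNearA.

Lemma inI_exists_gt v : I v -> exists x, I x /\ v < x.
Proof.
  intros Hv. destruct (near_b_exists_gt (fun _ => True) v) as [x [Ix [Hx _]]]; eauto.
  exists v; split; auto.
Qed.

Section IntegralsOnI.
Variable f : R -> R.
Hypothesis Hf : forall t, I t -> continuous f t.

Lemma ex_RInt_inI y z : I y -> I z -> ex_RInt f y z.
Proof.
  intros Hy Hz. apply (@ex_RInt_continuous R_CompleteNormedModule).
  intros t Ht. apply Hf, (inI_segment y z); auto.
Qed.

Lemma Rint_inI y z : I y -> I z -> Rint f y z = RInt f y z.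
Proof. intros; apply Rint_RInt, ex_RInt_inI; auto. Qed.

Lemma RInt_ge0_inI y z : I y -> I z -> y <= z ->
  (forall t, I t -> y <= t <= z -> 0 <= f t) -> 0 <= RInt f y z.
Proof.
  intros Hy Hz Hyz H. rewrite <- (Rmult_0_r (z - y)), <- RInt_const_R.
  apply RInt_le; auto.
  - apply ex_RInt_const.
  - apply ex_RInt_inI; auto.
  - intros t Ht. apply H; [apply (inI_between y z); auto|]; lra.
Qed.

Lemma RInt_gt0_inI y z : (forall t, I t -> 0 < f t) -> I y -> I z -> y < z -> 0 < RInt f y z.
Proof.
  intros Hp Hy Hz H. apply RInt_gt_0; auto.
  - intros t Ht; apply Hp; apply (inI_between y z); auto; lra.
  - intros t Ht; apply Hf; apply (inI_between y z); auto; lra.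
Qed.

Lemma RInt_incr_upper y : (forall t, I t -> y <= t -> 0 <= f t) -> I y ->
  forall x z, I x -> I z -> y <= x <= z -> RInt f y x <= RInt f y z.
Proof.
  intros Hpos Hy x z Hx Hz H.
  rewrite <- (RInt_Chasles_R f y x z) by (apply ex_RInt_inI; auto).
  assert (0 <= RInt f x z) by (apply RInt_ge0_inI; auto; [lra|intros; apply Hpos; auto; lra]).
  lra.
Qed.

Lemma RInt_decr_lower x : (forall t, I t -> t <= x -> 0 <= f t) -> I x ->
  forall y1 y2, I y1 -> I y2 -> y1 <= y2 <= x -> RInt f y2 x <= RInt f y1 x.
Proof.
  intros Hp Hx y1 y2 H1 H2 H.
  rewrite <- (RInt_Chasles_R f y1 y2 x) by (apply ex_RInt_inI; auto).
  assert (0 <= RInt f y1 y2) by (apply RInt_ge0_inI; auto; [lra|intros; apply Hp; auto; lra]).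
  lra.
Qed.

Lemma is_derive_RInt_inI p x : I p -> I x -> is_derive (fun t => RInt f p t) x (f x).
Proof.
  intros Hp Hx. apply (is_derive_RInt f (fun t => RInt f p t) p x); [|apply Hf; auto].
  destruct (inI_locally x Hx) as [e He]. exists e. intros y Hy.
  apply (@RInt_correct R_CompleteNormedModule), ex_RInt_inI; auto.
Qed.

Lemma is_derive_Rint_inI p x : I p -> I x -> is_derive (fun t => Rint f p t) x (f x).
Proof.
  intros Hp Hx. apply is_derive_ext_loc with (f := fun t => RInt f p t).
  - destruct (inI_locally x Hx) as [e He]. exists e. intros y Hy. symmetry. apply Rint_inI; auto.
  - apply is_derive_RInt_inI; auto.
Qed.

Lemma continuous_Rint_inI p x : I p -> I x -> continuous (fun t => Rint f p t) x.
Proof.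
  intros. apply (ex_derive_continuous (fun t => Rint f p t)).
  exists (f x). apply is_derive_Rint_inI; auto.
Qed.

Lemma lim_b_Rint_RInt y L : I y ->
  lim_b a b (fun z => Rint f y z) L <-> lim_b a b (fun z => RInt f y z) L.
Proof.
  intros Hy. assert (Heq : near_b a b (fun z => Rint f y z = RInt f y z)).
  { apply (near_b_impl (fun z => y <= z)); [|apply near_b_ge; auto].
    intros z Iz _. apply Rint_inI; auto. }
  apply lim_b_ext; auto.
Qed.

Lemma lim_a_Rint_RInt x L : I x ->
  lim_a a b (fun y => Rint f y x) L <-> lim_a a b (fun y => RInt f y x) L.
Proof.
  intros Hx. assert (Heq : near_a a b (fun y => Rint f y x = RInt f y x)).
  { apply (near_a_impl (fun y => y <= x)); [|apply near_a_le; auto].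
    intros y Iy _. apply Rint_inI; auto. }
  apply lim_a_ext; auto.
Qed.

Lemma lim_b_RInt_Ib y : I y -> Ib_fin a b f y -> lim_b a b (fun z => RInt f y z) (Ib a b f y).
Proof.
  intros Hy H. apply lim_b_Rint_RInt; auto.
  unfold Ib. apply epsilon_spec. exact H.
Qed.

Lemma Ib_shift y w : I y -> I w -> Ib_fin a b f y ->
  Ib_fin a b f w /\ Ib a b f y = RInt f y w + Ib a b f w.
Proof.
  intros Hy Hw Hfin.
  assert (H : lim_b a b (fun z => RInt f w z) (- RInt f y w + 1 * Ib a b f y)).
  { apply lim_b_ext with (f := fun z => - RInt f y w + 1 * RInt f y z).
    - apply (near_b_impl (fun z => w <= z)); [|apply near_b_ge; auto].
      intros z Iz _. rewrite <- (RInt_Chasles_R f y w z) by (apply ex_RInt_inI; auto). ring.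
    - apply lim_b_affine, lim_b_RInt_Ib; auto. }
  assert (Fw : Ib_fin a b f w) by (exists (- RInt f y w + 1 * Ib a b f y); apply lim_b_Rint_RInt; auto).
  split; auto. pose proof (lim_b_unique _ _ _ H (lim_b_RInt_Ib w Hw Fw)). lra.
Qed.

Lemma RInt_le_Ib y z : (forall t, I t -> y <= t -> 0 <= f t) ->
  Ib_fin a b f y -> I y -> I z -> y <= z -> RInt f y z <= Ib a b f y.
Proof.
  intros Hp Hfin Hy Hz Hyz.
  apply (monotone_le_lim_b (fun t => RInt f y t) y); auto.
  - intros x w Ix Iw H. apply RInt_incr_upper; auto.
  - apply lim_b_RInt_Ib; auto.
Qed.

End IntegralsOnI.

Lemma RInt_le_inI (f g : R -> R) y z :
  (forall t, I t -> continuous f t) -> (forall t, I t -> continuous g t) -> I y -> I z -> y <= z ->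
  (forall t, I t -> y <= t <= z -> f t <= g t) -> RInt f y z <= RInt g y z.
Proof.
  intros Hf Hg Hy Hz Hyz H. apply RInt_le; auto; try apply ex_RInt_inI; auto.
  intros t Ht. apply H; [apply (inI_between y z); auto|]; lra.
Qed.

Lemma Rint_inI_ext (f g : R -> R) y z : (forall t, I t -> continuous g t) -> I y -> I z ->
  (forall t, I t -> f t = g t) -> Rint f y z = RInt g y z.
Proof.
  intros Hg Hy Hz H.
  assert (Hfg : forall t, Rmin y z <= t <= Rmax y z -> g t = f t)
    by (intros t Ht; symmetry; apply H, (inI_segment y z); auto).
  rewrite Rint_RInt; [apply RInt_ext; intros t Ht; symmetry; apply Hfg; lra|].
  apply (ex_RInt_ext g f); [intros t Ht; apply Hfg; lra|apply ex_RInt_inI; auto].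
Qed.

Lemma Ib_le (f g : R -> R) y :
  (forall t, I t -> continuous f t) -> (forall t, I t -> continuous g t) ->
  Ib_fin a b f y -> Ib_fin a b g y -> I y ->
  (forall t, I t -> y <= t -> f t <= g t) -> Ib a b f y <= Ib a b g y.
Proof.
  intros Hf Hg Ff Fg Hy H.
  apply (lim_b_le _ _ _ _ (lim_b_RInt_Ib f Hf y Hy Ff) (lim_b_RInt_Ib g Hg y Hy Fg)).
  apply (near_b_impl (fun z => y <= z)); [|apply near_b_ge; auto].
  intros z Iz Hz. apply RInt_le_inI; auto. intros t It Ht. apply H; auto; lra.
Qed.

Lemma Ib_scal (f : R -> R) y k : (forall t, I t -> continuous f t) -> I y -> Ib_fin a b f y ->
  Ib_fin a b (fun v => k * f v) y /\ Ib a b (fun v => k * f v) y = k * Ib a b f y.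
Proof.
  intros Hf Hy Hfin.
  assert (Hk : forall t, I t -> continuous (fun v => k * f v) t)
    by (intros; apply continuous_scal_R; auto).
  assert (H : lim_b a b (fun z => RInt (fun v => k * f v) y z) (k * Ib a b f y)).
  { apply lim_b_ext with (f := fun z => 0 + k * RInt f y z).
    - apply (near_b_impl (fun z => y <= z)); [|apply near_b_ge; auto].
      intros z Iz _. rewrite RInt_scal_R by (apply ex_RInt_inI; auto). ring.
    - replace (k * Ib a b f y) with (0 + k * Ib a b f y) by ring.
      apply lim_b_affine, lim_b_RInt_Ib; auto. }
  assert (F : Ib_fin a b (fun v => k * f v) y)
    by (exists (k * Ib a b f y); apply lim_b_Rint_RInt; auto).
  split; auto. exact (lim_b_unique _ _ _ (lim_b_RInt_Ib _ Hk y Hy F) H).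
Qed.

Lemma is_derive_Ib (f : R -> R) u : (forall t, I t -> continuous f t) ->
  (forall y, I y -> Ib_fin a b f y) -> I u -> is_derive (Ib a b f) u (- f u).
Proof.
  intros Hf Hfin Hu.
  apply is_derive_ext_loc with (f := fun t => RInt f t u + Ib a b f u).
  - destruct (inI_locally u Hu) as [e He]. exists e. intros t Ht. symmetry.
    apply (Ib_shift f Hf t u); auto.
  - assert (H := is_derive_plus (fun t => RInt f t u) (fun _ => Ib a b f u) u (opp (f u)) zero).
    rewrite plus_zero_r in H. apply H; [|apply is_derive_const].
    apply (is_derive_RInt' f (fun t => RInt f t u) u u); [|apply Hf; auto].
    destruct (inI_locally u Hu) as [e He]. exists e. intros y Hy.
    apply (@RInt_correct R_CompleteNormedModule), (ex_RInt_inI f Hf); auto.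
Qed.

Lemma continuous_Ib (f : R -> R) u : (forall t, I t -> continuous f t) ->
  (forall y, I y -> Ib_fin a b f y) -> I u -> continuous (Ib a b f) u.
Proof.
  intros. apply (ex_derive_continuous (Ib a b f)).
  exists (- f u). apply is_derive_Ib; auto.
Qed.

Lemma inI_Some_a a' t : a = Some a' -> (I t <-> a' < t /\ ltB b t).
Proof. intros Ea. unfold inI, gtA. rewrite Ea. tauto. Qed.

Lemma inI_Some_b b' t : b = Some b' -> (I t <-> gtA a t /\ t < b').
Proof. intros Eb. unfold inI, ltB. rewrite Eb. tauto. Qed.

Lemma inI_midpoint_a a' z : a = Some a' -> I z -> I ((a' + z) / 2) /\ a' < (a' + z) / 2 < z.
Proof.
  intros Ea Iz. apply (inI_Some_a a' z Ea) in Iz as [H1 H2].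
  split; [|lra]. apply (inI_Some_a a' _ Ea). split; [lra|apply (ltB_mono z); auto; lra].
Qed.

Lemma inI_midpoint_b b' y : b = Some b' -> I y -> I ((y + b') / 2) /\ y < (y + b') / 2 < b'.
Proof.
  intros Eb Iy. apply (inI_Some_b b' y Eb) in Iy as [H1 H2].
  split; [|lra]. apply (inI_Some_b b' _ Eb). split; [apply (gtA_mono y); auto; lra|lra].
Qed.

Lemma extv_inI f p : I p -> extv a b f p = f p.
Proof. intros Hp. unfold extv. destruct excluded_middle_informative; tauto. Qed.

Lemma extv_limit1_in f p : ~ I p -> (exists L, limit1_in f I L p) -> limit1_in f I (extv a b f p) p.
Proof.
  intros Hp HL. unfold extv. destruct excluded_middle_informative; [tauto|].
  apply epsilon_spec. exact HL.
Qed.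

Lemma limit1_in_a_le (f : R -> R) a' L : a = Some a' -> limit1_in f I L a' ->
  (forall x y, I x -> I y -> x <= y -> f x <= f y) -> forall t, I t -> L <= f t.
Proof.
  intros Ea HL Hm t It. apply Rnot_lt_le; intros Hc.
  destruct (HL (L - f t)) as [alp [Halp H]]; [lra|].
  apply (inI_Some_a a' t Ea) in It as It'. destruct It' as [Ht1 Ht2].
  set (x := Rmin ((a' + t) / 2) (a' + alp / 2)).
  assert (Hx1 : a' < x) by (unfold x; apply Rmin_glb_lt; lra).
  assert (Hx2 : x <= (a' + t) / 2) by apply Rmin_l.
  assert (Hx3 : x <= a' + alp / 2) by apply Rmin_r.
  assert (Ix : I x) by (apply (inI_Some_a a' x Ea); split; auto; apply (ltB_mono t); auto; lra).
  assert (Hd : R_dist x a' < alp) by (unfold R_dist; rewrite Rabs_right; lra).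
  specialize (H x (conj Ix Hd)). simpl in H. unfold R_dist in H.
  apply Rabs_def2 in H. pose proof (Hm x t Ix It ltac:(lra)). lra.
Qed.

Lemma limit1_in_b_ge (f : R -> R) b' L : b = Some b' -> limit1_in f I L b' ->
  (forall x y, I x -> I y -> x <= y -> f x <= f y) -> forall t, I t -> f t <= L.
Proof.
  intros Eb HL Hm t It. apply Rnot_lt_le; intros Hc.
  destruct (HL (f t - L)) as [alp [Halp H]]; [lra|].
  apply (inI_Some_b b' t Eb) in It as It'. destruct It' as [Ht1 Ht2].
  set (x := Rmax ((b' + t) / 2) (b' - alp / 2)).
  assert (Hx1 : x < b') by (unfold x; apply Rmax_lub_lt; lra).
  assert (Hx2 : (b' + t) / 2 <= x) by apply Rmax_l.
  assert (Hx3 : b' - alp / 2 <= x) by apply Rmax_r.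
  assert (Ix : I x) by (apply (inI_Some_b b' x Eb); split; auto; apply (gtA_mono t); auto; lra).
  assert (Hd : R_dist x b' < alp) by (unfold R_dist; rewrite Rabs_left; lra).
  specialize (H x (conj Ix Hd)). simpl in H. unfold R_dist in H.
  apply Rabs_def2 in H. pose proof (Hm t x It Ix ltac:(lra)). lra.
Qed.

End Interval.

(** * Scale and speed quantities *)

Section Diffusion.
Context {a b : option R} {mu sigma : R -> R} {x0 : R} {refl : Prop}
  {c0 : R -> R} {c0a c0b : Rbar} {c1 : R -> R -> Rbar} {k1 : R}.
Hypothesis Hset : setting a b mu sigma x0.
Hypothesis HA : condA a b mu sigma x0 refl.
Hypothesis HB : condB a b mu sigma x0 refl c0 c0a c0b c1 k1.
Hypothesis HC : condC a b mu sigma x0 c0 c0a c0b c1.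
Local Notation I := (inI a b).
Local Notation E := (inE a b mu sigma x0).
Local Notation s := (sdens mu sigma x0).
Local Notation m := (mdens mu sigma x0).
Local Notation M := (Ib a b m).

Lemma inI_x0 : I x0.
Proof. apply Hset. Qed.

Lemma inE_inI x : I x -> E x.
Proof. intros; left; auto. Qed.

Lemma coefficients_regular x : I x -> continuity_pt mu x /\ continuity_pt sigma x /\ sigma x <> 0.
Proof. destruct Hset as (_ & _ & Hreg). apply Hreg. Qed.

Lemma sigma_neq0 x : I x -> sigma x <> 0.
Proof. intros Hx. apply (coefficients_regular x Hx). Qed.

Lemma continuous_sigma_sq x : I x -> continuous (fun u => sigma u ^ 2) x.
Proof.
  intros Hx. apply continuity_pt_filterlim.
  destruct (coefficients_regular x Hx) as [_ [Hs _]].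
  apply (continuity_pt_mult (fun u => sigma u) (fun u => sigma u ^ 1)); [exact Hs|].
  apply (continuity_pt_mult (fun u => sigma u) (fun u => 1)); [exact Hs|apply continuity_pt_const].
  intros u v; reflexivity.
Qed.

Lemma sdens_pos x : 0 < s x.
Proof. apply exp_pos. Qed.

Lemma sdens_continuous x : I x -> continuous s x.
Proof.
  intros Hx. apply continuous_exp_comp, (continuous_opp (fun t => Rint _ x0 t)).
  apply (continuous_Rint_inI (a := a) (b := b)); [|apply inI_x0|exact Hx].
  intros t It. destruct (coefficients_regular t It) as [Hmu [_ Hs0]].
  apply (continuous_mult (fun u => 2 * mu u) (fun u => / sigma u ^ 2)).
  - apply continuous_scal_R, continuity_pt_filterlim, Hmu.
  - apply continuous_Rinv_comp; [apply continuous_sigma_sq; auto|].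
    simpl. rewrite Rmult_1_r. intro Hc. apply Hs0. apply Rmult_integral in Hc. tauto.
Qed.

Lemma mdens_pos x : I x -> 0 < m x.
Proof.
  intros Hx. unfold mdens. apply Rinv_0_lt_compat, Rmult_lt_0_compat; [|apply sdens_pos].
  pose proof (sigma_neq0 x Hx). simpl. rewrite Rmult_1_r. nra.
Qed.

Lemma mdens_continuous x : I x -> continuous m x.
Proof.
  intros Hx. unfold mdens. apply continuous_Rinv_comp.
  - apply (continuous_mult (fun u => sigma u ^ 2) s);
      [apply continuous_sigma_sq|apply sdens_continuous]; auto.
  - pose proof (mdens_pos x Hx). unfold mdens in H. intro Hc. rewrite Hc, Rinv_0 in H. lra.
Qed.

Lemma c0_nonneg_inE p : E p -> 0 <= c0 p.
Proof. destruct HB as (Hpos & _). apply Hpos. Qed.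

Lemma c0_continuous_inE p : E p -> limit1_in c0 E (c0 p) p.
Proof. destruct HB as (_ & Hc & _). apply Hc. Qed.

Lemma c0_nonneg x : I x -> 0 <= c0 x.
Proof. intros Hx. apply c0_nonneg_inE, inE_inI, Hx. Qed.

Lemma c0_continuous x : I x -> continuous c0 x.
Proof.
  intros Hx. apply continuity_pt_filterlim.
  intros eps He. destruct (c0_continuous_inE x (inE_inI x Hx) eps He) as [alp [Halp Hl]].
  destruct (inI_open x Hx) as [d [Hd Hd2]].
  exists (Rmin alp d). split; [apply Rmin_glb_lt; lra|].
  intros y [_ Hy]. apply Hl. split.
  - apply inE_inI, Hd2. eapply Rlt_le_trans; [apply Hy|apply Rmin_r].
  - eapply Rlt_le_trans; [apply Hy|apply Rmin_l].
Qed.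

Definition NB_integrand u := RInt s x0 u * m u.

Lemma NB_integrand_continuous t : I t -> continuous NB_integrand t.
Proof.
  intros It. apply (continuous_mult (fun u => RInt s x0 u) m); [|apply mdens_continuous; auto].
  apply (ex_derive_continuous (fun u => RInt s x0 u)). exists (s t).
  eapply is_derive_RInt_inI; eauto using sdens_continuous, inI_x0.
Qed.

Lemma RInt_sdens_ge0 z : I z -> x0 <= z -> 0 <= RInt s x0 z.
Proof.
  intros. eapply RInt_ge0_inI; eauto using sdens_continuous, inI_x0.
  intros; left; apply sdens_pos.
Qed.

Lemma NB_integrand_ge0 t : I t -> x0 <= t -> 0 <= NB_integrand t.
Proof.
  intros. apply Rmult_le_pos; [apply RInt_sdens_ge0; auto|left; apply mdens_pos; auto].
Qed.

Lemma RInt_NB_integrand_incr z1 z2 : I z1 -> I z2 -> x0 <= z1 <= z2 ->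
  RInt NB_integrand x0 z1 <= RInt NB_integrand x0 z2.
Proof.
  intros. eapply RInt_incr_upper; eauto using NB_integrand_continuous, NB_integrand_ge0, inI_x0.
Qed.

Lemma NB_iff : NB a b mu sigma x0 <-> exists L, lim_b a b (fun z => RInt NB_integrand x0 z) L.
Proof.
  assert (Heq : near_b a b
            (fun z => Rint (fun u => Rint s x0 u * m u) x0 z = RInt NB_integrand x0 z)).
  { apply (near_b_impl (fun z => x0 <= z)); [|apply near_b_ge, inI_x0].
    intros z Iz _. eapply Rint_inI_ext; eauto using NB_integrand_continuous, inI_x0.
    intros t It. unfold NB_integrand. rewrite (Rint_inI s sdens_continuous x0 t inI_x0 It). reflexivity. }
  unfold NB, Ib_fin. split; intros [L HL]; exists L; apply (lim_b_ext _ _ _ Heq); exact HL.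
Qed.

Lemma RInt_sdens_mdens_le z t : I z -> I t -> x0 <= z <= t ->
  RInt s x0 z * RInt m z t <= RInt NB_integrand z t.
Proof.
  intros Iz It Hzt. rewrite <- RInt_scal_R by (eapply ex_RInt_inI; eauto using mdens_continuous).
  eapply RInt_le_inI; eauto using NB_integrand_continuous; [|lra|].
  - intros; apply continuous_scal_R, mdens_continuous; auto.
  - intros u Iu Hu. apply Rmult_le_compat_r; [left; apply mdens_pos; auto|].
    eapply RInt_incr_upper; eauto using sdens_continuous, inI_x0; [|lra].
    intros; left; apply sdens_pos.
Qed.

Lemma Ib_fin_mdens_of_NB : NB a b mu sigma x0 -> exists y, I y /\ Ib_fin a b m y.
Proof.
  intros HN. apply NB_iff in HN as [L HL].
  pose proof (monotone_le_lim_b _ x0 RInt_NB_integrand_incr L HL) as HPL.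
  destruct (inI_exists_gt x0 inI_x0) as [x1 [Ix1 Hx1]].
  assert (S01 : 0 < RInt s x0 x1).
  { eapply RInt_gt0_inI; eauto using sdens_continuous, inI_x0. intros; apply sdens_pos. }
  exists x1. split; auto.
  destruct (monotone_bounded_lim_b (fun t => RInt m x1 t) x1 Ix1)
    with (B := (L - RInt NB_integrand x0 x1) / RInt s x0 x1) as [L2 [HL2 _]].
  - intros x y Ix Iy Hxy. eapply RInt_incr_upper; eauto using mdens_continuous.
    intros; left; apply mdens_pos; auto.
  - intros t It Ht.
    pose proof (RInt_sdens_mdens_le x1 t Ix1 It ltac:(lra)).
    pose proof (RInt_Chasles_R NB_integrand x0 x1 t
                  ltac:(eapply ex_RInt_inI; eauto using NB_integrand_continuous, inI_x0)
                  ltac:(eapply ex_RInt_inI; eauto using NB_integrand_continuous, inI_x0)).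
    pose proof (HPL t It ltac:(lra)).
    apply Rmult_le_reg_l with (RInt s x0 x1); auto.
    replace (RInt s x0 x1 * ((L - RInt NB_integrand x0 x1) / RInt s x0 x1))
      with (L - RInt NB_integrand x0 x1) by (field; lra). lra.
  - exists L2. apply lim_b_Rint_RInt; auto using mdens_continuous.
Qed.

(* M[u, b) < oo is part of Condition A when b is natural; when b is entrance it
   follows from N(b) < oo. *)
Lemma mdens_Ib_fin u : I u -> Ib_fin a b m u.
Proof.
  intros Hu.
  assert (Hfin : exists y, I y /\ Ib_fin a b m y).
  { destruct HC as [_ [[_ HN]|[Hnat _]]].
    - apply Ib_fin_mdens_of_NB, HN.
    - exists x0. split; [apply inI_x0|].
      destruct HA as (_ & _ & _ & HM & _). apply HM; auto using inI_x0. }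
  destruct Hfin as [y [Iy Hy]].
  apply (Ib_shift m mdens_continuous y u); auto.
Qed.

Lemma M_derive u : I u -> is_derive M u (- m u).
Proof. intros; apply is_derive_Ib; auto using mdens_continuous, mdens_Ib_fin. Qed.

Lemma M_continuous u : I u -> continuous M u.
Proof. intros; apply continuous_Ib; auto using mdens_continuous, mdens_Ib_fin. Qed.

Lemma M_shift u w : I u -> I w -> M u = RInt m u w + M w.
Proof. intros; apply (Ib_shift m); auto using mdens_continuous, mdens_Ib_fin. Qed.

Lemma RInt_mdens_le_M u z : I u -> I z -> u <= z -> RInt m u z <= M u.
Proof.
  intros; apply RInt_le_Ib; auto using mdens_continuous, mdens_Ib_fin.
  intros; left; apply mdens_pos; auto.
Qed.

Lemma M_pos u : I u -> 0 < M u.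
Proof.
  intros Hu. destruct (inI_exists_gt u Hu) as [z [Iz Hz]].
  pose proof (RInt_mdens_le_M u z Hu Iz ltac:(lra)).
  pose proof (RInt_gt0_inI m mdens_continuous u z mdens_pos Hu Iz Hz). lra.
Qed.

(* [M u] and [G u] stand for M[u, b) and int_u^b 2 c0 dM, so that zeta' = 2 M s and
   g0' = G s. *)
Definition Gdens v := 2 * c0 v * m v.
Local Notation G := (Ib a b Gdens).
Definition zeta_dens u := 2 * M u * s u.
Definition g0_dens u := G u * s u.
Local Notation Z := (zeta a b mu sigma x0).
Local Notation g := (g0 a b mu sigma x0 c0).

Lemma Gdens_continuous t : I t -> continuous Gdens t.
Proof.
  intros It. apply (continuous_mult (fun v => 2 * c0 v) m); [|apply mdens_continuous; auto].
  apply continuous_scal_R, c0_continuous; auto.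
Qed.

Lemma Gdens_Ib_fin y : I y -> Ib_fin a b Gdens y.
Proof.
  intros Hy.
  assert (Hc0m : forall t, I t -> continuous (fun v => c0 v * m v) t).
  { intros t It. apply (continuous_mult c0 m); auto using c0_continuous, mdens_continuous. }
  replace Gdens with (fun v => 2 * (c0 v * m v))
    by (apply functional_extensionality; intros v; unfold Gdens; ring).
  destruct HB as (_ & _ & _ & _ & _ & _ & Hfin & _).
  apply (Ib_scal _ y 2 Hc0m Hy), Hfin, Hy.
Qed.

Lemma G_shift u w : I u -> I w -> G u = RInt Gdens u w + G w.
Proof. intros; apply (Ib_shift Gdens); auto using Gdens_continuous, Gdens_Ib_fin. Qed.

Lemma G_continuous u : I u -> continuous G u.
Proof. intros; apply continuous_Ib; auto using Gdens_continuous, Gdens_Ib_fin. Qed.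

Lemma G_nonneg u : I u -> 0 <= G u.
Proof.
  intros Hu. rewrite <- (RInt_point_R Gdens u).
  apply RInt_le_Ib; auto using Gdens_continuous, Gdens_Ib_fin; [|lra].
  intros t It _. unfold Gdens. pose proof (c0_nonneg t It). pose proof (mdens_pos t It). nra.
Qed.

Lemma zeta_dens_continuous t : I t -> continuous zeta_dens t.
Proof.
  intros It. apply (continuous_mult (fun u => 2 * M u) s); [|apply sdens_continuous; auto].
  apply continuous_scal_R, M_continuous; auto.
Qed.

Lemma g0_dens_continuous t : I t -> continuous g0_dens t.
Proof.
  intros It. apply (continuous_mult G s); [apply G_continuous|apply sdens_continuous]; auto.
Qed.

Lemma zeta_dens_pos t : I t -> 0 < zeta_dens t.
Proof. intros It. unfold zeta_dens. pose proof (M_pos t It). pose proof (sdens_pos t). nra. Qed.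

Lemma g0_dens_nonneg t : I t -> 0 <= g0_dens t.
Proof. intros It. unfold g0_dens. pose proof (G_nonneg t It). pose proof (sdens_pos t). nra. Qed.

Lemma zeta_sub y z : I y -> I z -> Z z - Z y = RInt zeta_dens y z.
Proof.
  intros Hy Hz. change (Rint zeta_dens x0 z - Rint zeta_dens x0 y = RInt zeta_dens y z).
  rewrite (Rint_inI _ zeta_dens_continuous x0 z inI_x0 Hz),
    (Rint_inI _ zeta_dens_continuous x0 y inI_x0 Hy).
  rewrite <- (RInt_Chasles_R zeta_dens x0 y z)
    by (eapply ex_RInt_inI; eauto using zeta_dens_continuous, inI_x0). ring.
Qed.

Lemma g0_sub y z : I y -> I z -> g z - g y = RInt g0_dens y z.
Proof.
  intros Hy Hz. change (Rint g0_dens x0 z - Rint g0_dens x0 y = RInt g0_dens y z).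
  rewrite (Rint_inI _ g0_dens_continuous x0 z inI_x0 Hz),
    (Rint_inI _ g0_dens_continuous x0 y inI_x0 Hy).
  rewrite <- (RInt_Chasles_R g0_dens x0 y z)
    by (eapply ex_RInt_inI; eauto using g0_dens_continuous, inI_x0). ring.
Qed.

Lemma zeta_lt y z : I y -> I z -> y < z -> Z y < Z z.
Proof.
  intros Hy Hz Hyz. pose proof (zeta_sub y z Hy Hz).
  pose proof (RInt_gt0_inI zeta_dens zeta_dens_continuous y z zeta_dens_pos Hy Hz Hyz). lra.
Qed.

Lemma zeta_le y z : I y -> I z -> y <= z -> Z y <= Z z.
Proof. intros Hy Hz [Hlt|<-]; [left; apply zeta_lt|right]; auto. Qed.

Lemma g0_le y z : I y -> I z -> y <= z -> g y <= g z.
Proof.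
  intros Hy Hz Hyz. pose proof (g0_sub y z Hy Hz).
  assert (0 <= RInt g0_dens y z)
    by (apply (RInt_ge0_inI _ g0_dens_continuous y z Hy Hz Hyz); intros; apply g0_dens_nonneg; auto).
  lra.
Qed.

Lemma zeta_continuous x : I x -> continuous Z x.
Proof. intros Hx. apply (continuous_Rint_inI _ zeta_dens_continuous); auto using inI_x0. Qed.

Lemma g0_continuous x : I x -> continuous g x.
Proof. intros Hx. apply (continuous_Rint_inI _ g0_dens_continuous); auto using inI_x0. Qed.

Lemma g0_sub_ge y z K : I y -> I z -> y <= z ->
  (forall t, I t -> y <= t <= z -> 2 * K * M t <= G t) -> K * (Z z - Z y) <= g z - g y.
Proof.
  intros Hy Hz Hyz H. rewrite zeta_sub, g0_sub by auto.
  rewrite <- RInt_scal_R by (eapply ex_RInt_inI; eauto using zeta_dens_continuous).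
  eapply (RInt_le_inI _ _ y z); eauto using g0_dens_continuous.
  - intros t It. apply continuous_scal_R, zeta_dens_continuous; auto.
  - intros t It Ht. unfold zeta_dens, g0_dens. pose proof (H t It Ht). pose proof (sdens_pos t). nra.
Qed.

Lemma g0_sub_le y z C D : I y -> I z -> y <= z ->
  (forall t, I t -> y <= t <= z -> G t <= 2 * C * M t + D) ->
  g z - g y <= C * (Z z - Z y) + D * RInt s y z.
Proof.
  intros Hy Hz Hyz H.
  assert (Hc : forall t, I t -> continuous (fun u => C * zeta_dens u + D * s u) t).
  { intros t It. apply (continuous_plus (fun u => C * zeta_dens u) (fun u => D * s u));
      apply continuous_scal_R; auto using zeta_dens_continuous, sdens_continuous. }
  rewrite zeta_sub, g0_sub by auto.
  rewrite <- !RInt_scal_R by (eapply ex_RInt_inI; eauto using zeta_dens_continuous, sdens_continuous).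
  rewrite <- RInt_plus_R.
  2, 3: eapply ex_RInt_inI; eauto; intros t It;
    apply continuous_scal_R; auto using zeta_dens_continuous, sdens_continuous.
  eapply (RInt_le_inI _ _ y z); eauto using g0_dens_continuous.
  intros t It Ht. unfold zeta_dens, g0_dens. pose proof (H t It Ht). pose proof (sdens_pos t). nra.
Qed.

(** * Behaviour of zeta and g0 at the boundaries *)

Lemma RInt_sdens_bounded_a : exists Ls, 0 < Ls /\ forall y, I y -> y <= x0 -> RInt s y x0 <= Ls.
Proof.
  destruct HA as (HS & _). destruct (HS x0 inI_x0) as [Ls HLs].
  apply (lim_a_Rint_RInt _ sdens_continuous x0 Ls inI_x0) in HLs.
  apply (lim_a_affine _ _ 0 (-1)) in HLs.
  exists (Rmax Ls 1). split; [pose proof (Rmax_r Ls 1); lra|].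
  assert (Hmono : forall y1 y2, I y1 -> I y2 -> y1 <= y2 <= x0 ->
            0 + -1 * RInt s y1 x0 <= 0 + -1 * RInt s y2 x0).
  { intros y1 y2 I1 I2 Hy12.
    pose proof (RInt_decr_lower s sdens_continuous x0 (fun t _ _ => Rlt_le _ _ (sdens_pos t))
                  inI_x0 y1 y2 I1 I2 Hy12). lra. }
  intros y Iy Hy. pose proof (Rmax_l Ls 1).
  pose proof (monotone_ge_lim_a _ x0 Hmono _ HLs y Iy Hy). lra.
Qed.

Definition SigA_integrand u := (M u - M x0) * s u.

Lemma SigA_integrand_continuous t : I t -> continuous SigA_integrand t.
Proof.
  intros It. apply (continuous_mult (fun u => M u - M x0) s); [|apply sdens_continuous; auto].
  apply (continuous_minus M (fun _ => M x0)); [apply M_continuous; auto|apply continuous_const].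
Qed.

Lemma SigA_integrand_nonneg t : I t -> t <= x0 -> 0 <= SigA_integrand t.
Proof.
  intros It Ht. unfold SigA_integrand. rewrite (M_shift t x0) by auto using inI_x0.
  apply Rmult_le_pos; [|left; apply sdens_pos]. ring_simplify.
  apply (RInt_ge0_inI _ mdens_continuous); auto using inI_x0.
  intros; left; apply mdens_pos; auto.
Qed.

Lemma RInt_SigA_integrand_decr y1 y2 : I y1 -> I y2 -> y1 <= y2 <= x0 ->
  RInt SigA_integrand y2 x0 <= RInt SigA_integrand y1 x0.
Proof.
  apply (RInt_decr_lower _ SigA_integrand_continuous); auto using SigA_integrand_nonneg, inI_x0.
Qed.

Lemma SigA_iff : SigA a b mu sigma x0 <-> exists L, lim_a a b (fun y => RInt SigA_integrand y x0) L.
Proof.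
  assert (Heq : near_a a b
            (fun y => Rint (fun u => Rint m u x0 * s u) y x0 = RInt SigA_integrand y x0)).
  { apply (near_a_impl (fun y => y <= x0)); [|apply near_a_le, inI_x0].
    intros y Iy _. apply (Rint_inI_ext _ _ y x0 SigA_integrand_continuous Iy inI_x0).
    intros t It. unfold SigA_integrand.
    rewrite (M_shift t x0 It inI_x0), (Rint_inI m mdens_continuous t x0 It inI_x0). ring. }
  unfold SigA, Ia_fin. split; intros [L HL]; exists L; apply (lim_a_ext _ _ _ Heq); exact HL.
Qed.

Lemma zeta_SigA_identity y : I y -> y <= x0 ->
  Z y = -2 * RInt SigA_integrand y x0 - 2 * M x0 * RInt s y x0.
Proof.
  intros Hy Hyx. pose proof (zeta_sub y x0 Hy inI_x0) as Hsub.
  assert (HZ0 : Z x0 = 0).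
  { change (Rint zeta_dens x0 x0 = 0).
    rewrite (Rint_inI _ zeta_dens_continuous x0 x0 inI_x0 inI_x0). apply RInt_point_R. }
  assert (e1 : ex_RInt SigA_integrand y x0)
    by (apply (ex_RInt_inI _ SigA_integrand_continuous); auto using inI_x0).
  assert (e2 : ex_RInt s y x0) by (apply (ex_RInt_inI _ sdens_continuous); auto using inI_x0).
  assert (Hdens : RInt zeta_dens y x0
                  = RInt (fun u => 2 * SigA_integrand u + 2 * M x0 * s u) y x0).
  { apply (RInt_ext (V := R_CompleteNormedModule)). intros t _.
    unfold zeta_dens, SigA_integrand. lra. }
  rewrite Hdens, RInt_plus_R, !RInt_scal_R in Hsub by auto using ex_RInt_scal.
  lra.
Qed.

Lemma zeta_bounded_a_of_SigA : SigA a b mu sigma x0 ->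
  exists Bz, forall y, I y -> y <= x0 -> Bz <= Z y.
Proof.
  intros HS. apply SigA_iff in HS as [L HL].
  apply (lim_a_affine _ _ 0 (-1)) in HL.
  destruct RInt_sdens_bounded_a as [Ls [HLs0 HLs]].
  exists (-2 * L - 2 * M x0 * Ls). intros y Iy Hy.
  rewrite zeta_SigA_identity by auto.
  assert (Hmono : forall y1 y2, I y1 -> I y2 -> y1 <= y2 <= x0 ->
            0 + -1 * RInt SigA_integrand y1 x0 <= 0 + -1 * RInt SigA_integrand y2 x0).
  { intros y1 y2 I1 I2 H12. pose proof (RInt_SigA_integrand_decr y1 y2 I1 I2 H12). lra. }
  pose proof (monotone_ge_lim_a _ x0 Hmono _ HL y Iy Hy).
  pose proof (M_pos x0 inI_x0). pose proof (HLs y Iy Hy). nra.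
Qed.

Lemma RInt_SigA_integrand_unbounded : ~ SigA a b mu sigma x0 ->
  forall K, exists w, I w /\ w <= x0 /\ forall y, I y -> y <= w -> K < RInt SigA_integrand y x0.
Proof.
  intros HS K.
  destruct (monotone_unbounded_a (fun y => - RInt SigA_integrand y x0) x0 inI_x0)
    with (K := - K) as [w [Iw [Hw H]]].
  - intros y1 y2 I1 I2 H12. pose proof (RInt_SigA_integrand_decr y1 y2 I1 I2 H12). lra.
  - intros [L HL]. apply HS, SigA_iff. exists (0 + -1 * L).
    apply (lim_a_affine _ _ 0 (-1)) in HL. revert HL. apply lim_a_ext.
    exists x0. split; [apply inI_x0|]. intros; lra.
  - exists w. split; auto. split; auto. intros y Iy Hy. specialize (H y Iy Hy). lra.
Qed.

Lemma zeta_to_minus_infty_a : ~ SigA a b mu sigma x0 ->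
  forall K, exists w, I w /\ w <= x0 /\ forall y, I y -> y <= w -> Z y < K.
Proof.
  intros HS K. destruct (RInt_SigA_integrand_unbounded HS (- K / 2)) as [w [Iw [Hw H]]].
  exists w. split; auto. split; auto. intros y Iy Hy. rewrite zeta_SigA_identity by (auto; lra).
  specialize (H y Iy Hy). pose proof (M_pos x0 inI_x0).
  assert (0 <= RInt s y x0).
  { apply (RInt_ge0_inI _ sdens_continuous); auto using inI_x0; [lra|].
    intros; left; apply sdens_pos. }
  nra.
Qed.

Lemma M_to_infty_a : ~ SigA a b mu sigma x0 ->
  forall K, exists w, I w /\ w <= x0 /\ forall y, I y -> y <= w -> K < M y.
Proof.
  intros HS K. destruct RInt_sdens_bounded_a as [Ls [HLs0 HLs]].
  destruct (RInt_SigA_integrand_unbounded HS (Rabs K * Ls)) as [w [Iw [Hw H]]].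
  exists w. split; auto. split; auto. intros y Iy Hy. specialize (H y Iy Hy).
  assert (HS_le : RInt SigA_integrand y x0 <= (M y - M x0) * RInt s y x0).
  { rewrite <- RInt_scal_R by (apply (ex_RInt_inI _ sdens_continuous); auto using inI_x0).
    assert (Hc : forall t, I t -> continuous (fun u => (M y - M x0) * s u) t)
      by (intros; apply continuous_scal_R, sdens_continuous; auto).
    apply (RInt_le_inI _ _ y x0 SigA_integrand_continuous Hc Iy inI_x0); [lra|].
    intros t It Ht. unfold SigA_integrand. apply Rmult_le_compat_r; [left; apply sdens_pos|].
    rewrite (M_shift t x0), (M_shift y x0) by auto using inI_x0. ring_simplify.
    apply (RInt_decr_lower _ mdens_continuous); auto using inI_x0.
    intros; left; apply mdens_pos; auto. }
  assert (0 <= RInt s y x0).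
  { apply (RInt_ge0_inI _ sdens_continuous); auto using inI_x0; [lra|].
    intros; left; apply sdens_pos. }
  pose proof (HLs y Iy ltac:(lra)). pose proof (M_pos x0 inI_x0).
  pose proof (Rabs_pos K). pose proof (Rle_abs K).
  assert (M y - M x0 > Rabs K); [|lra].
  apply Rnot_le_lt. intros Hc.
  assert ((M y - M x0) * RInt s y x0 <= Rabs K * Ls).
  { destruct (Rle_dec 0 (M y - M x0)); [apply Rmult_le_compat; auto|nra]. }
  lra.
Qed.

Lemma zeta_NB_identity z : I z -> Z z = 2 * RInt NB_integrand x0 z + 2 * M z * RInt s x0 z.
Proof.
  intros Hz.
  assert (HI : forall t, Rmin x0 z <= t <= Rmax x0 z -> I t)
    by (intros; apply (inI_segment x0 z); auto using inI_x0).
  (* Integration by parts of S[x0, .] against dM. *)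
  assert (Hparts := is_RInt_scal_derive (V := R_CompleteNormedModule)
                      (fun t => RInt s x0 t) M s (fun t => - m t) x0 z).
  specialize (Hparts
    (fun t Ht => is_derive_RInt_inI s sdens_continuous x0 t inI_x0 (HI t Ht))
    (fun t Ht => M_derive t (HI t Ht)) (fun t Ht => sdens_continuous t (HI t Ht))
    (fun t Ht => continuous_opp m t (mdens_continuous t (HI t Ht)))).
  apply is_RInt_unique in Hparts. rewrite RInt_point_R in Hparts.
  assert (Hcm : forall t, I t -> continuous (fun u => s u * M u - NB_integrand u) t).
  { intros t It. apply (continuous_minus (fun u => s u * M u) NB_integrand);
      [apply (continuous_mult s M)|]; auto using sdens_continuous, M_continuous, NB_integrand_continuous. }
  assert (Hparts' : RInt (fun t => s t * M t - NB_integrand t) x0 z = RInt s x0 z * M z).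
  { transitivity (RInt (fun t => plus (scal (s t) (M t)) (scal (RInt s x0 t) (- m t))) x0 z).
    - apply RInt_ext. intros t _. unfold NB_integrand, plus, scal; simpl; unfold mult; simpl. ring.
    - etransitivity; [apply Hparts|]. unfold minus, plus, opp, scal; simpl; unfold mult; simpl. ring. }
  change (Rint zeta_dens x0 z = 2 * RInt NB_integrand x0 z + 2 * M z * RInt s x0 z).
  rewrite (Rint_inI _ zeta_dens_continuous x0 z inI_x0 Hz).
  assert (Hdens : RInt zeta_dens x0 z
                  = RInt (fun t => 2 * (s t * M t - NB_integrand t) + 2 * NB_integrand t) x0 z).
  { apply RInt_ext. intros t _. unfold zeta_dens. lra. }
  assert (Hex : forall f, (forall t, I t -> continuous f t) -> ex_RInt f x0 z)
    by (intros f Hf; apply (ex_RInt_inI f Hf); auto using inI_x0).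
  rewrite Hdens, RInt_plus_R, !RInt_scal_R, Hparts'; [ring|..];
    apply Hex; intros; try apply continuous_scal_R; auto using NB_integrand_continuous.
Qed.

Lemma zeta_bounded_b_of_NB : NB a b mu sigma x0 -> exists Bz, forall z, I z -> x0 <= z -> Z z <= Bz.
Proof.
  intros HN. apply NB_iff in HN as [L HL].
  pose proof (monotone_le_lim_b _ x0 RInt_NB_integrand_incr L HL) as HPL.
  exists (2 * L). intros z Iz Hz.
  assert (M z * RInt s x0 z <= L - RInt NB_integrand x0 z); [|rewrite zeta_NB_identity by auto; lra].
  assert (H1 := lim_b_affine _ _ 0 (RInt s x0 z)
                  (lim_b_RInt_Ib m mdens_continuous z Iz (mdens_Ib_fin z Iz))).
  assert (0 + RInt s x0 z * M z <= L - RInt NB_integrand x0 z); [|lra].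
  apply (lim_b_le _ _ _ _ H1 (lim_b_const _ z Iz)).
  apply (near_b_impl (fun t => z <= t)); [|apply near_b_ge; auto].
  intros t It Hzt.
  pose proof (RInt_sdens_mdens_le z t Iz It ltac:(lra)).
  pose proof (RInt_Chasles_R NB_integrand x0 z t
                ltac:(apply (ex_RInt_inI _ NB_integrand_continuous); auto using inI_x0)
                ltac:(apply (ex_RInt_inI _ NB_integrand_continuous); auto)).
  pose proof (HPL t It ltac:(lra)). lra.
Qed.

Lemma zeta_to_infty_b : ~ NB a b mu sigma x0 ->
  forall K, exists w, I w /\ x0 <= w /\ forall z, I z -> w <= z -> K < Z z.
Proof.
  intros HN K.
  destruct (monotone_unbounded_b _ x0 inI_x0 RInt_NB_integrand_incr) with (K := K / 2)
    as [w [Iw [Hw H]]].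
  - intros HL. apply HN, NB_iff, HL.
  - exists w. split; auto. split; auto. intros z Iz Hz. rewrite zeta_NB_identity by auto.
    specialize (H z Iz Hz). pose proof (M_pos z Iz). pose proof (RInt_sdens_ge0 z Iz ltac:(lra)).
    nra.
Qed.

Lemma G_le_of_c0_le w1 C : I w1 -> 0 <= C -> (forall t, I t -> t <= w1 -> c0 t <= C) ->
  forall t, I t -> t <= w1 -> G t <= 2 * C * M t + G w1.
Proof.
  intros Iw HC0 Hc t It Ht. rewrite (G_shift t w1), (M_shift t w1) by auto.
  assert (RInt Gdens t w1 <= RInt (fun u => 2 * C * m u) t w1).
  { apply (RInt_le_inI _ _ t w1 Gdens_continuous); auto.
    - intros; apply continuous_scal_R, mdens_continuous; auto.
    - intros u Iu Hu. unfold Gdens. pose proof (Hc u Iu ltac:(lra)).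
      pose proof (mdens_pos u Iu). pose proof (c0_nonneg u Iu). nra. }
  rewrite RInt_scal_R in H by (apply (ex_RInt_inI _ mdens_continuous); auto).
  pose proof (M_pos w1 Iw). nra.
Qed.

Lemma g0_bounded_a_of_SigA : SigA a b mu sigma x0 ->
  (exists C w1, I w1 /\ w1 <= x0 /\ 0 <= C /\ forall t, I t -> t <= w1 -> c0 t <= C) ->
  exists Bg, forall y, I y -> y <= x0 -> Bg <= g y.
Proof.
  intros HS [C [w1 [Iw [Hw [HC0 Hc]]]]].
  destruct (zeta_bounded_a_of_SigA HS) as [Bz HBz].
  destruct RInt_sdens_bounded_a as [Ls [HLs0 HLs]].
  exists (g w1 - C * (Z w1 - Bz) - G w1 * Ls). intros y Iy Hy.
  pose proof (G_nonneg w1 Iw). pose proof (HBz w1 Iw Hw).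
  destruct (Rle_dec y w1) as [Hyw|Hyw].
  - pose proof (g0_sub_le y w1 C (G w1) Iy Iw Hyw
                  (fun t It Ht => G_le_of_c0_le w1 C Iw HC0 Hc t It ltac:(lra))).
    assert (RInt s y w1 <= Ls).
    { eapply Rle_trans; [|apply (HLs y Iy Hy)].
      apply (RInt_incr_upper _ sdens_continuous); auto using inI_x0.
      intros; left; apply sdens_pos. }
    pose proof (HBz y Iy Hy). nra.
  - pose proof (g0_le w1 y Iw Iy ltac:(lra)). nra.
Qed.

Lemma g0_bounded_b_of_NB : NB a b mu sigma x0 ->
  (exists C w1, I w1 /\ x0 <= w1 /\ 0 <= C /\ forall t, I t -> w1 <= t -> c0 t <= C) ->
  exists Bg, forall z, I z -> x0 <= z -> g z <= Bg.
Proof.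
  intros HN [C [w1 [Iw [Hw [HC0 Hc]]]]].
  destruct (zeta_bounded_b_of_NB HN) as [Bz HBz].
  exists (g w1 + C * (Bz - Z w1)). intros z Iz Hz.
  pose proof (HBz w1 Iw Hw).
  destruct (Rle_dec w1 z) as [Hwz|Hwz].
  - assert (HG : forall t, I t -> w1 <= t <= z -> G t <= 2 * C * M t + 0).
    { intros t It Ht. rewrite Rplus_0_r.
      destruct (Ib_scal m t (2 * C) mdens_continuous It (mdens_Ib_fin t It)) as [F1 E1].
      rewrite <- E1. apply Ib_le; auto using Gdens_continuous, Gdens_Ib_fin.
      - intros; apply continuous_scal_R, mdens_continuous; auto.
      - intros u Iu Hu. unfold Gdens. pose proof (Hc u Iu ltac:(lra)).
        pose proof (mdens_pos u Iu). nra. }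
    pose proof (g0_sub_le w1 z C 0 Iw Iz Hwz HG). pose proof (HBz z Iz Hz). nra.
  - pose proof (g0_le z w1 Iz Iw ltac:(lra)). nra.
Qed.

Lemma g0_slope_ge_a K : 0 < K -> ~ SigA a b mu sigma x0 ->
  (exists K' w1, K < K' /\ I w1 /\ forall t, I t -> t <= w1 -> K' <= c0 t) ->
  exists w, I w /\ forall y z, I y -> I z -> y <= z <= w -> K * (Z z - Z y) <= g z - g y.
Proof.
  intros HK HS [K' [w1 [HK' [Iw1 Hc]]]].
  destruct (M_to_infty_a HS (K' * M w1 / (K' - K))) as [w2 [Iw2 [_ Hw2]]].
  exists (Rmin w1 w2). split; [apply inI_Rmin; auto|].
  intros y z Iy Iz Hyz. apply g0_sub_ge; auto; [lra|].
  intros t It Ht. pose proof (Rmin_l w1 w2). pose proof (Rmin_r w1 w2).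
  assert (HR : 2 * K' * RInt m t w1 <= RInt Gdens t w1).
  { rewrite <- RInt_scal_R by (apply (ex_RInt_inI _ mdens_continuous); auto).
    apply (RInt_le_inI _ _ t w1 (fun u Iu => continuous_scal_R _ _ u (mdens_continuous u Iu))
             Gdens_continuous It Iw1); [lra|].
    intros u Iu Hu. unfold Gdens. pose proof (Hc u Iu ltac:(lra)). pose proof (mdens_pos u Iu). nra. }
  assert (HM := Hw2 t It ltac:(lra)).
  rewrite (G_shift t w1), (M_shift t w1) in * by auto.
  pose proof (G_nonneg w1 Iw1). pose proof (M_pos w1 Iw1).
  assert (K' * M w1 <= (K' - K) * (RInt m t w1 + M w1)).
  { replace (K' * M w1) with ((K' - K) * (K' * M w1 / (K' - K))) at 1 by (field; lra).
    apply Rmult_le_compat_l; lra. }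
  nra.
Qed.

Lemma g0_slope_ge_b K : (exists w1, I w1 /\ forall t, I t -> w1 <= t -> K <= c0 t) ->
  exists w, I w /\ forall y z, I y -> I z -> w <= y <= z -> K * (Z z - Z y) <= g z - g y.
Proof.
  intros [w1 [Iw1 Hc]]. exists w1. split; auto. intros y z Iy Iz Hyz.
  apply g0_sub_ge; auto; [lra|]. intros t It Ht.
  destruct (Ib_scal m t (2 * K) mdens_continuous It (mdens_Ib_fin t It)) as [F1 E1].
  rewrite <- E1. apply Ib_le; auto using Gdens_continuous, Gdens_Ib_fin.
  - intros; apply continuous_scal_R, mdens_continuous; auto.
  - intros u Iu Hu. unfold Gdens. pose proof (Hc u Iu ltac:(lra)). pose proof (mdens_pos u Iu). nra.
Qed.

Lemma endpoints_lt a' b' : a = Some a' -> b = Some b' -> a' < b'.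
Proof. intros Ea Eb. destruct Hset as (H & _). rewrite Ea, Eb in H. exact H. Qed.

Lemma a_lt_x0 a' : a = Some a' -> a' < x0.
Proof. intros Ea. apply (inI_Some_a (b := b) a' x0 Ea), inI_x0. Qed.

Lemma x0_lt_b b' : b = Some b' -> x0 < b'.
Proof. intros Eb. apply (inI_Some_b (a := a) b' x0 Eb), inI_x0. Qed.

Lemma c0_bounded_near_a a' : a = Some a' -> attainable_a a b mu sigma x0 ->
  exists C w1, I w1 /\ w1 <= x0 /\ 0 <= C /\ forall t, I t -> t <= w1 -> c0 t <= C.
Proof.
  intros Ea Hat. assert (Ea' : E a') by (right; left; auto).
  destruct (c0_continuous_inE a' Ea' 1) as [alp [Halp H]]; [lra|].
  pose proof (a_lt_x0 a' Ea).
  exists (c0 a' + 1), (Rmin x0 (a' + alp / 2)).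
  assert (Hw1 : a' < Rmin x0 (a' + alp / 2)) by (apply Rmin_glb_lt; lra).
  pose proof (Rmin_l x0 (a' + alp / 2)). pose proof (Rmin_r x0 (a' + alp / 2)).
  split; [apply (inI_Some_a (b := b) a' _ Ea); split; [lra|apply (ltB_mono x0); [apply inI_x0|lra]]|].
  split; [lra|split; [pose proof (c0_nonneg_inE a' Ea'); lra|]].
  intros t It Ht. apply (inI_Some_a (b := b) a' t Ea) in It as It'.
  assert (Hd : R_dist t a' < alp) by (unfold R_dist; rewrite Rabs_right; lra).
  specialize (H t (conj (inE_inI t It) Hd)). simpl in H. unfold R_dist in H.
  apply Rabs_def2 in H. lra.
Qed.

Lemma c0_bounded_near_b b' : b = Some b' -> entrance_b a b mu sigma x0 ->
  exists C w1, I w1 /\ x0 <= w1 /\ 0 <= C /\ forall t, I t -> w1 <= t -> c0 t <= C.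
Proof.
  intros Eb Hen. assert (Eb' : E b') by (right; right; auto).
  destruct (c0_continuous_inE b' Eb' 1) as [alp [Halp H]]; [lra|].
  pose proof (x0_lt_b b' Eb).
  exists (c0 b' + 1), (Rmax x0 (b' - alp / 2)).
  assert (Hw1 : Rmax x0 (b' - alp / 2) < b') by (apply Rmax_lub_lt; lra).
  pose proof (Rmax_l x0 (b' - alp / 2)). pose proof (Rmax_r x0 (b' - alp / 2)).
  split; [apply (inI_Some_b (a := a) b' _ Eb); split; [apply (gtA_mono x0); [apply inI_x0|lra]|lra]|].
  split; [lra|split; [pose proof (c0_nonneg_inE b' Eb'); lra|]].
  intros t It Ht. apply (inI_Some_b (a := a) b' t Eb) in It as It'.
  assert (Hd : R_dist t b' < alp) by (unfold R_dist; rewrite Rabs_left; lra).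
  specialize (H t (conj (inE_inI t It) Hd)). simpl in H. unfold R_dist in H.
  apply Rabs_def2 in H. lra.
Qed.

Lemma SigA_of_attainable : attainable_a a b mu sigma x0 -> SigA a b mu sigma x0.
Proof. intros [[H _]|[H _]]; exact H. Qed.

Lemma monotone_limit_a (f : R -> R) B : (forall x y, I x -> I y -> x <= y -> f x <= f y) ->
  (forall y, I y -> y <= x0 -> B <= f y) ->
  forall a', a = Some a' -> exists L, limit1_in f I L a'.
Proof.
  intros Hmono HB' a' Ea.
  destruct (monotone_bounded_lim_a f x0 inI_x0) with (B := B) as [L [HL _]]; auto.
  - intros; apply Hmono; auto; lra.
  - exists L. apply (lim_a_limit1_in f L a' Ea HL).
Qed.

Lemma monotone_limit_b (f : R -> R) B : (forall x y, I x -> I y -> x <= y -> f x <= f y) ->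
  (forall z, I z -> x0 <= z -> f z <= B) ->
  forall b', b = Some b' -> exists L, limit1_in f I L b'.
Proof.
  intros Hmono HB' b' Eb.
  destruct (monotone_bounded_lim_b f x0 inI_x0) with (B := B) as [L [HL _]]; auto.
  - intros; apply Hmono; auto; lra.
  - exists L. apply (lim_b_limit1_in f L b' Eb HL).
Qed.

Lemma zeta_limit_a a' : a = Some a' -> attainable_a a b mu sigma x0 -> exists L, limit1_in Z I L a'.
Proof.
  intros Ea Hat. destruct (zeta_bounded_a_of_SigA (SigA_of_attainable Hat)) as [Bz HBz].
  apply (monotone_limit_a Z Bz zeta_le HBz a' Ea).
Qed.

Lemma g0_limit_a a' : a = Some a' -> attainable_a a b mu sigma x0 -> exists L, limit1_in g I L a'.
Proof.
  intros Ea Hat.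
  destruct (g0_bounded_a_of_SigA (SigA_of_attainable Hat) (c0_bounded_near_a a' Ea Hat))
    as [Bg HBg].
  apply (monotone_limit_a g Bg g0_le HBg a' Ea).
Qed.

Lemma zeta_limit_b b' : b = Some b' -> entrance_b a b mu sigma x0 -> exists L, limit1_in Z I L b'.
Proof.
  intros Eb Hen. destruct (zeta_bounded_b_of_NB (proj2 Hen)) as [Bz HBz].
  apply (monotone_limit_b Z Bz zeta_le HBz b' Eb).
Qed.

Lemma g0_limit_b b' : b = Some b' -> entrance_b a b mu sigma x0 -> exists L, limit1_in g I L b'.
Proof.
  intros Eb Hen.
  destruct (g0_bounded_b_of_NB (proj2 Hen) (c0_bounded_near_b b' Eb Hen)) as [Bg HBg].
  apply (monotone_limit_b g Bg g0_le HBg b' Eb).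
Qed.

Section BoundaryExtension.
Variable f : R -> R.
Hypothesis Hla : forall a', a = Some a' -> attainable_a a b mu sigma x0 -> exists L, limit1_in f I L a'.
Hypothesis Hlb : forall b', b = Some b' -> entrance_b a b mu sigma x0 -> exists L, limit1_in f I L b'.
Local Notation fE := (extv a b f).

Section Monotone.
Hypothesis Hmon : forall x y, I x -> I y -> x <= y -> f x <= f y.

Lemma extv_a_le a' : a = Some a' -> attainable_a a b mu sigma x0 -> forall t, I t -> fE a' <= f t.
Proof.
  intros Ea Hat. apply (limit1_in_a_le f a'); auto.
  apply extv_limit1_in; auto. intros H. apply (inI_Some_a a' a' Ea) in H. lra.
Qed.

Lemma extv_b_ge b' : b = Some b' -> entrance_b a b mu sigma x0 -> forall t, I t -> f t <= fE b'.
Proof.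
  intros Eb Hen. apply (limit1_in_b_ge f b'); auto.
  apply extv_limit1_in; auto. intros H. apply (inI_Some_b b' b' Eb) in H. lra.
Qed.

Lemma extv_nondecreasing y z : E y -> E z -> y <= z -> fE y <= fE z.
Proof.
  intros Ey Ez Hyz. destruct (Req_dec y z) as [<-|Hne]; [lra|].
  destruct Ey as [Iy|[[Ea Hat]|[Eb Hen]]]; destruct Ez as [Iz|[[Ea' Hat']|[Eb' Hen']]].
  - rewrite !extv_inI by auto. apply Hmon; auto.
  - apply (inI_Some_a z y Ea') in Iy. lra.
  - rewrite extv_inI by auto. apply extv_b_ge; auto.
  - rewrite (extv_inI f z Iz). apply extv_a_le; auto.
  - rewrite Ea in Ea'; inversion Ea'; lra.
  - pose proof (extv_a_le y Ea Hat _ inI_x0). pose proof (extv_b_ge z Eb' Hen' _ inI_x0). lra.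
  - apply (inI_Some_b y z Eb) in Iz. lra.
  - pose proof (endpoints_lt z y Ea' Eb). lra.
  - rewrite Eb in Eb'; inversion Eb'; lra.
Qed.
End Monotone.

Lemma extv_increasing : (forall x y, I x -> I y -> x < y -> f x < f y) ->
  forall y z, E y -> E z -> y < z -> fE y < fE z.
Proof.
  intros Hmon y z Ey Ez Hyz.
  assert (Hle : forall x y, I x -> I y -> x <= y -> f x <= f y)
    by (intros x' y' Ix Iy [H|<-]; [left; apply Hmon|right]; auto).
  destruct Ey as [Iy|[[Ea Hat]|[Eb Hen]]]; destruct Ez as [Iz|[[Ea' Hat']|[Eb' Hen']]].
  - rewrite !extv_inI by auto. apply Hmon; auto.
  - apply (inI_Some_a z y Ea') in Iy. lra.
  - rewrite extv_inI by auto. destruct (inI_midpoint_b z y Eb' Iy) as [It Ht].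
    pose proof (extv_b_ge Hle z Eb' Hen' _ It). pose proof (Hmon y _ Iy It ltac:(lra)). lra.
  - rewrite (extv_inI f z Iz). destruct (inI_midpoint_a y z Ea Iz) as [It Ht].
    pose proof (extv_a_le Hle y Ea Hat _ It). pose proof (Hmon _ z It Iz ltac:(lra)). lra.
  - rewrite Ea in Ea'; inversion Ea'; lra.
  - destruct (inI_midpoint_a y x0 Ea inI_x0) as [It Ht].
    destruct (inI_midpoint_b z x0 Eb' inI_x0) as [It' Ht'].
    pose proof (extv_a_le Hle y Ea Hat _ It). pose proof (extv_b_ge Hle z Eb' Hen' _ It').
    pose proof (Hmon _ _ It It' ltac:(lra)). lra.
  - apply (inI_Some_b y z Eb) in Iz. lra.
  - pose proof (endpoints_lt z y Ea' Eb). lra.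
  - rewrite Eb in Eb'; inversion Eb'; lra.
Qed.

Lemma extv_continuous_inE : (forall x, I x -> continuous f x) ->
  forall p, E p -> limit1_in fE E (fE p) p.
Proof.
  intros Hc p Ep eps He. simpl. unfold R_dist.
  destruct Ep as [Ip|[[Ea Hat]|[Eb Hen]]].
  - assert (Hcp := Hc p Ip). apply continuity_pt_filterlim in Hcp.
    destruct (Hcp eps He) as [alp [Halp H]].
    destruct (inI_open p Ip) as [dI [HdI HI]].
    exists (Rmin alp dI). split; [apply Rmin_glb_lt; lra|].
    intros q [Eq Hq]. assert (Iq : I q) by (apply HI; eapply Rlt_le_trans; [apply Hq|apply Rmin_r]).
    rewrite !extv_inI by auto. destruct (Req_dec q p) as [->|Hne].
    + rewrite Rminus_diag, Rabs_R0; lra.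
    + apply H. split; [split; [exact Logic.I|auto]|].
      simpl; unfold R_dist. eapply Rlt_le_trans; [apply Hq|apply Rmin_l].
  - assert (HL := extv_limit1_in f p
                    (fun H => Rlt_irrefl p (proj1 (proj1 (inI_Some_a p p Ea) H))) (Hla p Ea Hat)).
    destruct (HL eps He) as [alp [Halp H]].
    pose proof (a_lt_x0 p Ea).
    exists (Rmin alp (x0 - p)). split; [apply Rmin_glb_lt; lra|].
    intros q [Eq Hq]. pose proof (Rmin_l alp (x0 - p)). pose proof (Rmin_r alp (x0 - p)).
    destruct Eq as [Iq|[[Ea' _]|[Eb' _]]].
    + rewrite extv_inI by auto. apply H. split; auto. simpl; unfold R_dist. lra.
    + rewrite Ea in Ea'; inversion Ea'; subst. rewrite Rminus_diag, Rabs_R0; lra.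
    + pose proof (x0_lt_b q Eb'). rewrite Rabs_right in Hq by lra. lra.
  - assert (HL := extv_limit1_in f p
                    (fun H => Rlt_irrefl p (proj2 (proj1 (inI_Some_b p p Eb) H))) (Hlb p Eb Hen)).
    destruct (HL eps He) as [alp [Halp H]].
    pose proof (x0_lt_b p Eb).
    exists (Rmin alp (p - x0)). split; [apply Rmin_glb_lt; lra|].
    intros q [Eq Hq]. pose proof (Rmin_l alp (p - x0)). pose proof (Rmin_r alp (p - x0)).
    destruct Eq as [Iq|[[Ea' _]|[Eb' _]]].
    + rewrite extv_inI by auto. apply H. split; auto. simpl; unfold R_dist. lra.
    + pose proof (a_lt_x0 q Ea'). rewrite Rabs_left in Hq by lra. lra.
    + rewrite Eb in Eb'; inversion Eb'; subst. rewrite Rminus_diag, Rabs_R0; lra.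
Qed.
End BoundaryExtension.

Local Notation Zext := (extv a b Z).
Local Notation gext := (extv a b g).

Lemma Zext_increasing y z : E y -> E z -> y < z -> Zext y < Zext z.
Proof. apply (extv_increasing Z zeta_limit_a zeta_limit_b zeta_lt). Qed.

Lemma gext_nondecreasing y z : E y -> E z -> y <= z -> gext y <= gext z.
Proof. apply (extv_nondecreasing g g0_limit_a g0_limit_b g0_le). Qed.

Lemma Zext_continuous p : E p -> limit1_in Zext E (Zext p) p.
Proof. apply (extv_continuous_inE Z zeta_limit_a zeta_limit_b zeta_continuous). Qed.

Lemma gext_continuous p : E p -> limit1_in gext E (gext p) p.
Proof. apply (extv_continuous_inE g g0_limit_a g0_limit_b g0_continuous). Qed.

(** * Lower semicontinuity of F0 *)

Local Notation F := (F0 a b mu sigma x0 c0 c1).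
Local Notation Rbar_E := (inRbar a b mu sigma x0).

Lemma k1_pos : 0 < k1.
Proof. destruct HB as (_ & _ & _ & _ & _ & _ & _ & _ & Hk & _). exact Hk. Qed.

Lemma c1_ge_k1 y z c : Rbar_E y z -> c1 y z = Fin c -> k1 <= c.
Proof.
  intros H Hc. destruct HB as (_ & _ & _ & _ & _ & _ & _ & _ & _ & Hk & _).
  specialize (Hk y z H). rewrite Hc in Hk. exact Hk.
Qed.

Lemma c1_continuous y z : Rbar_E y z -> match c1 y z with
  | Fin r => forall eps, 0 < eps -> exists del, 0 < del /\
      forall y' z', Rbar_E y' z' -> Rabs (y' - y) < del -> Rabs (z' - z) < del ->
        exists r', c1 y' z' = Fin r' /\ Rabs (r' - r) < eps
  | PInf => forall K, exists del, 0 < del /\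
      forall y' z', Rbar_E y' z' -> Rabs (y' - y) < del -> Rabs (z' - z) < del ->
        Rbar_lt (Fin K) (c1 y' z')
  end.
Proof. destruct HB as (_ & _ & _ & _ & _ & _ & _ & _ & _ & _ & Hc & _). apply Hc. Qed.

Lemma F0_diag y z : ~ y < z -> F y z = PInf.
Proof. intros H. unfold F0. destruct (Rlt_dec y z); [contradiction|reflexivity]. Qed.

Lemma Rbar_lt_F0 T y z : E y -> E z ->
  (forall c, y < z -> c1 y z = Fin c -> T * (Zext z - Zext y) < c + gext z - gext y) ->
  Rbar_lt (Fin T) (F y z).
Proof.
  intros Ey Ez H. unfold F0. destruct (Rlt_dec y z) as [Hlt|]; [|exact Logic.I].
  destruct (c1 y z) as [c|] eqn:Ec; [|exact Logic.I]. simpl.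
  pose proof (Zext_increasing y z Ey Ez Hlt).
  apply Rlt_div_r; [lra|]. apply H; auto.
Qed.

Lemma F0_gt_0 y z : Rbar_E y z -> Rbar_lt (Fin 0) (F y z).
Proof.
  intros [Ey [Ez Hle]]. apply Rbar_lt_F0; auto. intros c Hlt Hc.
  pose proof (c1_ge_k1 y z c (conj Ey (conj Ez Hle)) Hc). pose proof k1_pos.
  pose proof (gext_nondecreasing y z Ey Ez Hle). lra.
Qed.

(* Near the diagonal the numerator of F0 stays above k1 while its denominator tends to 0. *)
Lemma F0_lsc_diag y t : E y -> 0 < t -> exists e, 0 < e /\ forall y' z', Rbar_E y' z' ->
  Rabs (y' - y) < e -> Rabs (z' - y) < e -> Rbar_lt (Fin t) (F y' z').
Proof.
  intros Ey Ht. pose proof k1_pos.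
  set (eta := k1 / (2 * (t + 1))).
  assert (Heta : 0 < eta) by (unfold eta; apply Rdiv_lt_0_compat; lra).
  assert (Hteta : t * (2 * eta) < k1).
  { unfold eta. replace (t * (2 * (k1 / (2 * (t + 1))))) with (k1 * (t / (t + 1))) by (field; lra).
    assert (t / (t + 1) < 1) by (apply Rlt_div_l; lra). nra. }
  destruct (limit1_in_sub Zext E y y (Zext_continuous y Ey) (Zext_continuous y Ey) (2 * eta))
    as [d [Hd HZ]]; [lra|].
  exists d. split; auto. intros y' z' H' Hy' Hz'. pose proof H' as [Ey' [Ez' Hle']].
  apply Rbar_lt_F0; auto. intros c Hlt' Ec.
  pose proof (c1_ge_k1 y' z' c H' Ec). pose proof (gext_nondecreasing y' z' Ey' Ez' Hle').
  specialize (HZ y' z' Ey' Ez' Hy' Hz'). rewrite Rminus_diag, Rminus_0_r in HZ.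
  apply Rabs_def2 in HZ. nra.
Qed.

Lemma F0_lsc_fin y z c t : Rbar_E y z -> c1 y z = Fin c -> 0 < t ->
  t * (Zext z - Zext y) < c + gext z - gext y ->
  exists e, 0 < e /\ forall y' z', Rbar_E y' z' ->
    Rabs (y' - y) < e -> Rabs (z' - z) < e -> Rbar_lt (Fin t) (F y' z').
Proof.
  intros Hyz Hc Ht Hlt. pose proof Hyz as [Ey [Ez _]].
  set (e0 := (c + gext z - gext y - t * (Zext z - Zext y)) / (2 * (1 + t))).
  assert (He0 : 0 < e0) by (apply Rdiv_lt_0_compat; lra).
  assert (He0' : e0 * (1 + t) <= (c + gext z - gext y - t * (Zext z - Zext y)) / 2)
    by (unfold e0; right; field; lra).
  pose proof (c1_continuous y z Hyz) as Hc1. rewrite Hc in Hc1.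
  destruct (Hc1 (e0 / 3)) as [d1 [Hd1 Hc1']]; [lra|].
  destruct (limit1_in_sub Zext E y z (Zext_continuous y Ey) (Zext_continuous z Ez) (e0 / 3))
    as [d2 [Hd2 HZ]]; [lra|].
  destruct (limit1_in_sub gext E y z (gext_continuous y Ey) (gext_continuous z Ez) (e0 / 3))
    as [d3 [Hd3 Hg]]; [lra|].
  set (e := Rmin d1 (Rmin d2 d3)).
  assert (He : e <= d1 /\ e <= d2 /\ e <= d3).
  { unfold e. pose proof (Rmin_l d1 (Rmin d2 d3)). pose proof (Rmin_r d1 (Rmin d2 d3)).
    pose proof (Rmin_l d2 d3). pose proof (Rmin_r d2 d3). lra. }
  exists e. split; [unfold e; repeat apply Rmin_glb_lt; lra|].
  intros y' z' H' Hy' Hz'. pose proof H' as [Ey' [Ez' _]].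
  destruct (Hc1' y' z' H' ltac:(lra) ltac:(lra)) as [c' [Ec' Hc']].
  apply Rbar_lt_F0; auto. intros c'' _ Ec''. rewrite Ec' in Ec''. injection Ec'' as <-.
  specialize (HZ y' z' Ey' Ez' ltac:(lra) ltac:(lra)).
  specialize (Hg y' z' Ey' Ez' ltac:(lra) ltac:(lra)).
  apply Rabs_def2 in Hc'. apply Rabs_def2 in HZ. apply Rabs_def2 in Hg. nra.
Qed.

Lemma F0_lsc_inf y z t : Rbar_E y z -> c1 y z = PInf -> 0 < t ->
  exists e, 0 < e /\ forall y' z', Rbar_E y' z' ->
    Rabs (y' - y) < e -> Rabs (z' - z) < e -> Rbar_lt (Fin t) (F y' z').
Proof.
  intros Hyz Hc Ht. pose proof Hyz as [Ey [Ez _]].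
  pose proof (c1_continuous y z Hyz) as Hc1. rewrite Hc in Hc1.
  destruct (Hc1 (t * (Zext z - Zext y + 1))) as [d1 [Hd1 Hc1']].
  destruct (limit1_in_sub Zext E y z (Zext_continuous y Ey) (Zext_continuous z Ez) 1)
    as [d2 [Hd2 HZ]]; [lra|].
  exists (Rmin d1 d2). split; [apply Rmin_glb_lt; lra|].
  intros y' z' H' Hy' Hz'. pose proof H' as [Ey' [Ez' Hle']].
  pose proof (Rmin_l d1 d2). pose proof (Rmin_r d1 d2).
  specialize (Hc1' y' z' H' ltac:(lra) ltac:(lra)).
  apply Rbar_lt_F0; auto. intros c' _ Ec'. rewrite Ec' in Hc1'. simpl in Hc1'.
  specialize (HZ y' z' Ey' Ez' ltac:(lra) ltac:(lra)). apply Rabs_def2 in HZ.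
  pose proof (gext_nondecreasing y' z' Ey' Ez' Hle'). nra.
Qed.

Lemma F0_lsc y z : Rbar_E y z -> forall t, Rbar_lt (Fin t) (F y z) ->
  exists e, 0 < e /\ forall y' z', Rbar_E y' z' ->
    Rabs (y' - y) < e -> Rabs (z' - z) < e -> Rbar_lt (Fin t) (F y' z').
Proof.
  intros Hyz t Ht. pose proof Hyz as [Ey [Ez Hle]].
  destruct (Rle_dec t 0) as [Ht0|Ht0].
  { exists 1. split; [lra|]. intros y' z' H' _ _.
    apply (Rbar_lt_le_trans 0); [apply F0_gt_0, H'|exact Ht0]. }
  apply Rnot_le_lt in Ht0.
  destruct (Rlt_dec y z) as [Hlt|Hn].
  2: { assert (z = y) by lra. subst z. apply F0_lsc_diag; auto. }
  unfold F0 in Ht. destruct (Rlt_dec y z) as [_|]; [|contradiction].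
  destruct (c1 y z) as [c|] eqn:Ec; [|apply F0_lsc_inf; auto].
  apply (F0_lsc_fin y z c); auto. simpl in Ht.
  apply Rlt_div_r; [|exact Ht]. pose proof (Zext_increasing y z Ey Ez Hlt). lra.
Qed.

(** * Sublevel sets of F0 *)

Lemma attainable_or_natural_a : attainable_a a b mu sigma x0 \/ natural_a a b mu sigma x0.
Proof. destruct HC as [[H|[H _]] _]; auto. Qed.

Lemma entrance_or_natural_b : entrance_b a b mu sigma x0 \/ natural_b a b mu sigma x0.
Proof. destruct HC as [_ [H|[H _]]]; auto. Qed.

Lemma attainable_a_finite : attainable_a a b mu sigma x0 -> exists a', a = Some a'.
Proof.
  intros Hat. destruct a as [a'|] eqn:Ea; [exists a'; auto|exfalso].
  destruct HA as (_ & _ & _ & _ & Hnat & _). apply (proj1 (Hnat eq_refl)).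
  destruct Hat as [[HS _]|[HS _]]; exact HS.
Qed.

Lemma entrance_b_finite : entrance_b a b mu sigma x0 -> exists b', b = Some b'.
Proof.
  intros Hen. destruct b as [b'|] eqn:Eb; [exists b'; auto|exfalso].
  destruct HA as (_ & _ & _ & _ & _ & Hnat). apply (proj2 (Hnat eq_refl)), Hen.
Qed.

Lemma inE_inI_natural_a y w : natural_a a b mu sigma x0 -> E y -> I w -> y <= w -> I y.
Proof.
  intros [HS _] [Iy|[[_ Hat]|[Eb _]]] Iw Hyw; auto.
  - exfalso. apply HS, SigA_of_attainable, Hat.
  - apply (inI_Some_b y w Eb) in Iw. lra.
Qed.

Lemma inE_inI_natural_b z w : natural_b a b mu sigma x0 -> E z -> I w -> w <= z -> I z.
Proof.
  intros [_ HN] [Iz|[[Ea _]|[_ Hen]]] Iw Hwz; auto.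
  - apply (inI_Some_a z w Ea) in Iw. lra.
  - exfalso. apply HN, Hen.
Qed.

Lemma c0_eventually_ge_a K : natural_a a b mu sigma x0 -> Rbar_lt (Fin K) c0a ->
  exists w, I w /\ forall t, I t -> t <= w -> K <= c0 t.
Proof.
  intros Hn HK. destruct HB as (_ & _ & Hl & _). specialize (Hl Hn).
  assert (Hnear : near_a a b (fun x => K < c0 x)).
  { destruct c0a as [c|]; simpl in *; [|apply Hl].
    apply (near_a_impl (fun x => Rabs (c0 x - c) < c - K)); [|apply Hl; lra].
    intros x _ Hx. apply Rabs_def2 in Hx. lra. }
  destruct Hnear as [w [Iw Hw]].
  destruct (near_a_exists_lt (fun x => x < w) w (ex_intro _ w (conj Iw (fun _ _ H => H))) Iw)
    as [w1 [Iw1 [_ Hw1]]].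
  exists w1. split; auto. intros t It Ht. left. apply Hw; [apply It|lra].
Qed.

Lemma c0_eventually_ge_b K : natural_b a b mu sigma x0 -> Rbar_lt (Fin K) c0b ->
  exists w, I w /\ forall t, I t -> w <= t -> K <= c0 t.
Proof.
  intros Hn HK. destruct HB as (_ & _ & _ & Hl & _). specialize (Hl Hn).
  assert (Hnear : near_b a b (fun x => K < c0 x)).
  { destruct c0b as [c|]; simpl in *; [|apply Hl].
    apply (near_b_impl (fun x => Rabs (c0 x - c) < c - K)); [|apply Hl; lra].
    intros x _ Hx. apply Rabs_def2 in Hx. lra. }
  destruct Hnear as [w [Iw Hw]].
  destruct (near_b_exists_gt (fun x => w < x) w (ex_intro _ w (conj Iw (fun _ H _ => H))) Iw)
    as [w1 [Iw1 [_ Hw1]]].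
  exists w1. split; auto. intros t It Ht. left. apply Hw; [lra|apply It].
Qed.

Lemma c0_level T : (natural_a a b mu sigma x0 -> Rbar_lt (Fin T) c0a) ->
  (natural_b a b mu sigma x0 -> Rbar_lt (Fin T) c0b) ->
  exists K, T < K /\
    (natural_a a b mu sigma x0 ->
       exists K' w, K < K' /\ I w /\ forall t, I t -> t <= w -> K' <= c0 t) /\
    (natural_b a b mu sigma x0 ->
       exists K' w, K < K' /\ I w /\ forall t, I t -> w <= t -> K' <= c0 t).
Proof.
  intros HTa HTb.
  assert (Ha : exists Ka, T < Ka /\ (natural_a a b mu sigma x0 -> Rbar_lt (Fin Ka) c0a)).
  { destruct (classic (natural_a a b mu sigma x0)) as [Hn|Hn]; [|exists (T + 1); split; [lra|tauto]].
    destruct (Rbar_lt_gap T c0a (HTa Hn)) as [Ka [HKa HKa']]. exists Ka; auto. }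
  assert (Hb : exists Kb, T < Kb /\ (natural_b a b mu sigma x0 -> Rbar_lt (Fin Kb) c0b)).
  { destruct (classic (natural_b a b mu sigma x0)) as [Hn|Hn]; [|exists (T + 1); split; [lra|tauto]].
    destruct (Rbar_lt_gap T c0b (HTb Hn)) as [Kb [HKb HKb']]. exists Kb; auto. }
  destruct Ha as [Ka [HKa Ha]]. destruct Hb as [Kb [HKb Hb]].
  set (K := (T + Rmin Ka Kb) / 2).
  assert (T < Rmin Ka Kb) by (apply Rmin_glb_lt; lra).
  pose proof (Rmin_l Ka Kb). pose proof (Rmin_r Ka Kb).
  exists K. split; [unfold K; lra|split; intros Hn].
  - destruct (c0_eventually_ge_a Ka Hn (Ha Hn)) as [w [Iw Hw]].
    exists Ka, w. split; [unfold K; lra|auto].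
  - destruct (c0_eventually_ge_b Kb Hn (Hb Hn)) as [w [Iw Hw]].
    exists Kb, w. split; [unfold K; lra|auto].
Qed.

Lemma inE_ge_a a' y : a = Some a' -> E y -> a' <= y.
Proof.
  intros Ea [Iy|[[Ea2 _]|[Eb _]]].
  - apply (inI_Some_a a' y Ea) in Iy. lra.
  - rewrite Ea in Ea2. injection Ea2 as ->. lra.
  - pose proof (endpoints_lt a' y Ea Eb). lra.
Qed.

Lemma inE_le_b b' z : b = Some b' -> E z -> z <= b'.
Proof.
  intros Eb [Iz|[[Ea _]|[Eb2 _]]].
  - apply (inI_Some_b b' z Eb) in Iz. lra.
  - pose proof (endpoints_lt z b' Ea Eb). lra.
  - rewrite Eb in Eb2. injection Eb2 as ->. lra.
Qed.

Lemma gext_slope_ge_right K w : I w -> 0 <= K ->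
  (natural_b a b mu sigma x0 ->
     exists K' w1, K < K' /\ I w1 /\ forall t, I t -> w1 <= t -> K' <= c0 t) ->
  exists C, 0 <= C /\ forall z, E z -> w <= z -> K * (Zext z - Z w - C) <= gext z - g w.
Proof.
  intros Iw HK Hlev.
  destruct entrance_or_natural_b as [Hen|Hnb].
  - destruct (entrance_b_finite Hen) as [b' Eb]. assert (Eb' : E b') by (right; right; auto).
    pose proof (Zext_increasing w b' (inE_inI w Iw) Eb' (proj2 (proj1 (inI_Some_b b' w Eb) Iw)))
      as HZb. rewrite extv_inI in HZb by exact Iw.
    exists (Zext b' - Z w). split; [lra|]. intros z Ez Hwz.
    assert (Zext z <= Zext b').
    { destruct (Req_dec z b') as [->|Hne]; [lra|].
      left. apply Zext_increasing; auto. pose proof (inE_le_b b' z Eb Ez). lra. }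
    pose proof (gext_nondecreasing w z (inE_inI w Iw) Ez Hwz) as Hgz.
    rewrite extv_inI in Hgz by exact Iw.
    nra.
  - destruct (Hlev Hnb) as [K' [w1 [HK' [Iw1 Hc]]]].
    destruct (g0_slope_ge_b K) as [wb0 [Iwb0 PB]].
    { exists w1. split; auto. intros t It Ht. specialize (Hc t It Ht). lra. }
    set (wb := Rmax w wb0).
    assert (Hw_wb : w <= wb) by apply Rmax_l. assert (Hwb0 : wb0 <= wb) by apply Rmax_r.
    assert (Iwb : I wb) by (apply inI_Rmax; auto).
    exists (Z wb - Z w). split; [pose proof (zeta_le w wb Iw Iwb Hw_wb); lra|].
    intros z Ez Hwz. assert (Iz : I z) by (apply (inE_inI_natural_b z w); auto).
    rewrite !extv_inI by exact Iz.
    destruct (Rle_dec z wb) as [Hzb|Hzb].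
    + pose proof (zeta_le z wb Iz Iwb Hzb). pose proof (g0_le w z Iw Iz Hwz). nra.
    + pose proof (PB wb z Iwb Iz ltac:(lra)). pose proof (g0_le w wb Iw Iwb Hw_wb). nra.
Qed.

Lemma gext_slope_ge_left K w : I w -> 0 < K ->
  (natural_a a b mu sigma x0 ->
     exists K' w1, K < K' /\ I w1 /\ forall t, I t -> t <= w1 -> K' <= c0 t) ->
  exists C, 0 <= C /\ forall y, E y -> y <= w -> K * (Z w - Zext y - C) <= g w - gext y.
Proof.
  intros Iw HK Hlev.
  destruct attainable_or_natural_a as [Hat|Hna].
  - destruct (attainable_a_finite Hat) as [a' Ea]. assert (Ea' : E a') by (right; left; auto).
    pose proof (Zext_increasing a' w Ea' (inE_inI w Iw) (proj1 (proj1 (inI_Some_a a' w Ea) Iw)))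
      as HZa. rewrite (extv_inI Z w Iw) in HZa.
    exists (Z w - Zext a'). split; [lra|]. intros y Ey Hyw.
    assert (Zext a' <= Zext y).
    { destruct (Req_dec y a') as [->|Hne]; [lra|].
      left. apply Zext_increasing; auto. pose proof (inE_ge_a a' y Ea Ey). lra. }
    pose proof (gext_nondecreasing y w Ey (inE_inI w Iw) Hyw) as Hgy.
    rewrite (extv_inI g w Iw) in Hgy.
    nra.
  - destruct (g0_slope_ge_a K HK (proj1 Hna) (Hlev Hna)) as [wa1 [Iwa1 PA]].
    set (wa := Rmin wa1 w).
    assert (Hwa1 : wa <= wa1) by apply Rmin_l. assert (Hwa_w : wa <= w) by apply Rmin_r.
    assert (Iwa : I wa) by (apply inI_Rmin; auto).
    exists (Z w - Z wa). split; [pose proof (zeta_le wa w Iwa Iw Hwa_w); lra|].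
    intros y Ey Hyw. assert (Iy : I y) by (apply (inE_inI_natural_a y w); auto).
    rewrite !extv_inI by exact Iy.
    destruct (Rle_dec wa y) as [Hay|Hay].
    + pose proof (zeta_le wa y Iwa Iy Hay). pose proof (g0_le y w Iy Iw Hyw). nra.
    + pose proof (PA y wa Iy Iwa ltac:(lra)). pose proof (g0_le wa w Iwa Iw Hwa_w). nra.
Qed.

Lemma F0_gt_near_a T : 0 < T -> natural_a a b mu sigma x0 -> Rbar_lt (Fin T) c0a ->
  (natural_b a b mu sigma x0 -> Rbar_lt (Fin T) c0b) ->
  exists al, I al /\ forall y z, Rbar_E y z -> y < al -> Rbar_lt (Fin T) (F y z).
Proof.
  intros HT Hna HTa HTb.
  destruct (c0_level T (fun _ => HTa) HTb) as [K [HTK [Hlev_a Hlev_b]]].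
  destruct (g0_slope_ge_a K ltac:(lra) (proj1 Hna) (Hlev_a Hna)) as [wa [Iwa Hslope]].
  destruct (gext_slope_ge_right K wa Iwa ltac:(lra) Hlev_b) as [C [HC0 Hfar]].
  destruct (zeta_to_minus_infty_a (proj1 Hna) (Z wa - K * C / (K - T))) as [w3 [Iw3 [_ Hw3]]].
  exists (Rmin w3 wa). split; [apply inI_Rmin; auto|].
  intros y z Hyz Hy. pose proof Hyz as [Ey [Ez Hle]].
  pose proof (Rmin_l w3 wa). pose proof (Rmin_r w3 wa).
  assert (Iy : I y) by (apply (inE_inI_natural_a y wa); auto; lra).
  apply Rbar_lt_F0; auto. intros c Hlt Hc.
  pose proof (c1_ge_k1 y z c Hyz Hc). pose proof k1_pos.
  rewrite (extv_inI Z y Iy), (extv_inI g y Iy).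
  destruct (Rle_dec z wa) as [Hzw|Hzw].
  - assert (Iz : I z) by (apply (inE_inI_natural_a z wa); auto).
    rewrite (extv_inI Z z Iz), (extv_inI g z Iz).
    pose proof (Hslope y z Iy Iz ltac:(lra)). pose proof (zeta_lt y z Iy Iz Hlt).
    pose proof (slope_bound_lt T K 0 c (Z z - Z y) (g z - g y)). nra.
  - pose proof (Hfar z Ez ltac:(lra)). pose proof (Hslope y wa Iy Iwa ltac:(lra)).
    pose proof (Zext_increasing wa z (inE_inI wa Iwa) Ez ltac:(lra)) as HZwa.
    rewrite (extv_inI Z wa Iwa) in HZwa.
    pose proof (Hw3 y Iy ltac:(lra)).
    assert (K * C <= (K - T) * (Zext z - Z y)).
    { replace (K * C) with ((K - T) * (K * C / (K - T))) by (field; lra).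
      apply Rmult_le_compat_l; lra. }
    pose proof (slope_bound_lt T K C c (Zext z - Z y) (gext z - g y)). lra.
Qed.

Lemma F0_gt_near_b T : 0 < T -> natural_b a b mu sigma x0 -> Rbar_lt (Fin T) c0b ->
  (natural_a a b mu sigma x0 -> Rbar_lt (Fin T) c0a) ->
  exists de, I de /\ forall y z, Rbar_E y z -> de < z -> Rbar_lt (Fin T) (F y z).
Proof.
  intros HT Hnb HTb HTa.
  destruct (c0_level T HTa (fun _ => HTb)) as [K [HTK [Hlev_a Hlev_b]]].
  destruct (Hlev_b Hnb) as [K' [w1 [HK' [Iw1 Hc0]]]].
  destruct (g0_slope_ge_b K) as [wb [Iwb Hslope]].
  { exists w1. split; auto. intros t It Ht. specialize (Hc0 t It Ht). lra. }
  destruct (gext_slope_ge_left K wb Iwb ltac:(lra) Hlev_a) as [C [HC0 Hfar]].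
  destruct (zeta_to_infty_b (proj2 Hnb) (Z wb + K * C / (K - T))) as [w3 [Iw3 [_ Hw3]]].
  exists (Rmax w3 wb). split; [apply inI_Rmax; auto|].
  intros y z Hyz Hz. pose proof Hyz as [Ey [Ez Hle]].
  pose proof (Rmax_l w3 wb). pose proof (Rmax_r w3 wb).
  assert (Iz : I z) by (apply (inE_inI_natural_b z wb); auto; lra).
  apply Rbar_lt_F0; auto. intros c Hlt Hc.
  pose proof (c1_ge_k1 y z c Hyz Hc). pose proof k1_pos.
  rewrite (extv_inI Z z Iz), (extv_inI g z Iz).
  destruct (Rle_dec wb y) as [Hwy|Hwy].
  - assert (Iy : I y) by (apply (inE_inI_natural_b y wb); auto).
    rewrite (extv_inI Z y Iy), (extv_inI g y Iy).
    pose proof (Hslope y z Iy Iz ltac:(lra)). pose proof (zeta_lt y z Iy Iz Hlt).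
    pose proof (slope_bound_lt T K 0 c (Z z - Z y) (g z - g y)). nra.
  - pose proof (Hfar y Ey ltac:(lra)). pose proof (Hslope wb z Iwb Iz ltac:(lra)).
    pose proof (Zext_increasing y wb Ey (inE_inI wb Iwb) ltac:(lra)) as HZwb.
    rewrite (extv_inI Z wb Iwb) in HZwb.
    pose proof (Hw3 z Iz ltac:(lra)).
    assert (K * C <= (K - T) * (Z z - Zext y)).
    { replace (K * C) with ((K - T) * (K * C / (K - T))) by (field; lra).
      apply Rmult_le_compat_l; lra. }
    pose proof (slope_bound_lt T K C c (Z z - Zext y) (g z - gext y)). lra.
Qed.

Lemma F0_witness_a : (exists y z r, inRr a b mu sigma x0 y z /\ F y z = Fin r) ->
  exists y z r, inRr a b mu sigma x0 y z /\ F y z = Fin r /\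
    (natural_a a b mu sigma x0 -> Rbar_lt (Fin r) c0a).
Proof.
  intros Hfin.
  destruct (classic (natural_a a b mu sigma x0)) as [Hna|Hna].
  2: { destruct Hfin as (y & z & r & H1 & H2). exists y, z, r. tauto. }
  destruct HC as [[Hat|[_ [Hinf|(c & Ec & _ & yh & zh & Hh & Fh)]]] _].
  - exfalso. apply (proj1 Hna), SigA_of_attainable, Hat.
  - destruct Hfin as (y & z & r & H1 & H2). exists y, z, r. rewrite Hinf. simpl. tauto.
  - destruct (F yh zh) as [rh|] eqn:Eh; [|contradiction].
    exists yh, zh, rh. rewrite Ec. auto.
Qed.

Lemma F0_witness_b : (exists y z r, inRr a b mu sigma x0 y z /\ F y z = Fin r) ->
  exists y z r, inRr a b mu sigma x0 y z /\ F y z = Fin r /\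
    (natural_b a b mu sigma x0 -> Rbar_lt (Fin r) c0b).
Proof.
  intros Hfin.
  destruct (classic (natural_b a b mu sigma x0)) as [Hnb|Hnb].
  2: { destruct Hfin as (y & z & r & H1 & H2). exists y, z, r. tauto. }
  destruct HC as [_ [Hen|[_ [Hinf|(c & Ec & _ & yt & zt & Ht & Ft)]]]].
  - exfalso. apply (proj2 Hnb), Hen.
  - destruct Hfin as (y & z & r & H1 & H2). exists y, z, r. rewrite Hinf. simpl. tauto.
  - destruct (F yt zt) as [rt|] eqn:Et; [|contradiction].
    exists yt, zt, rt. rewrite Ec. auto.
Qed.

Lemma F0_witness_below_c0 : (exists y z r, inRr a b mu sigma x0 y z /\ F y z = Fin r) ->
  exists y z r, inRr a b mu sigma x0 y z /\ F y z = Fin r /\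
    (natural_a a b mu sigma x0 -> Rbar_lt (Fin r) c0a) /\
    (natural_b a b mu sigma x0 -> Rbar_lt (Fin r) c0b).
Proof.
  intros Hfin.
  destruct (F0_witness_a Hfin) as (ya & za & ra & Ha1 & Ha2 & Ha3).
  destruct (F0_witness_b Hfin) as (yb & zb & rb & Hb1 & Hb2 & Hb3).
  destruct (Rle_dec ra rb).
  - exists ya, za, ra. do 3 (split; [assumption|]).
    intros Hnb. apply (Rbar_lt_le_trans rb); auto.
  - exists yb, zb, rb. do 2 (split; [assumption|]). split; [|assumption].
    intros Hna. apply (Rbar_lt_le_trans ra); auto; lra.
Qed.

Lemma F0_sublevel_lower T : 0 < T -> (natural_a a b mu sigma x0 -> Rbar_lt (Fin T) c0a) ->
  (natural_b a b mu sigma x0 -> Rbar_lt (Fin T) c0b) ->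
  exists al, E al /\ (forall x, al < x -> gtA a x) /\
    forall y z, Rbar_E y z -> Rbar_le (F y z) (Fin T) -> al <= y.
Proof.
  intros HT HTa HTb. destruct attainable_or_natural_a as [Hat|Hna].
  - destruct (attainable_a_finite Hat) as [a' Ea].
    exists a'. split; [right; left; auto|split].
    + intros x Hx. unfold gtA. rewrite Ea. exact Hx.
    + intros y z [Ey _] _. apply (inE_ge_a a' y Ea Ey).
  - destruct (F0_gt_near_a T HT Hna (HTa Hna) HTb) as [al [Ial Hal]].
    exists al. split; [apply inE_inI; auto|split].
    + intros x Hx. apply (gtA_mono al); [apply Ial|lra].
    + intros y z Hyz HF. apply Rnot_lt_le. intros Hlt. specialize (Hal y z Hyz Hlt).
      destruct (F y z); simpl in *; lra.
Qed.

Lemma F0_sublevel_upper T : 0 < T -> (natural_a a b mu sigma x0 -> Rbar_lt (Fin T) c0a) ->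
  (natural_b a b mu sigma x0 -> Rbar_lt (Fin T) c0b) ->
  exists de, E de /\ (forall x, x < de -> ltB b x) /\
    forall y z, Rbar_E y z -> Rbar_le (F y z) (Fin T) -> z <= de.
Proof.
  intros HT HTa HTb. destruct entrance_or_natural_b as [Hen|Hnb].
  - destruct (entrance_b_finite Hen) as [b' Eb].
    exists b'. split; [right; right; auto|split].
    + intros x Hx. unfold ltB. rewrite Eb. exact Hx.
    + intros y z [_ [Ez _]] _. apply (inE_le_b b' z Eb Ez).
  - destruct (F0_gt_near_b T HT Hnb (HTb Hnb) HTa) as [de [Ide Hde]].
    exists de. split; [apply inE_inI; auto|split].
    + intros x Hx. apply (ltB_mono de); [apply Ide|lra].
    + intros y z Hyz HF. apply Rnot_lt_le. intros Hlt. specialize (Hde y z Hyz Hlt).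
      destruct (F y z); simpl in *; lra.
Qed.

Lemma F0_sublevel_in_box T : 0 < T -> (natural_a a b mu sigma x0 -> Rbar_lt (Fin T) c0a) ->
  (natural_b a b mu sigma x0 -> Rbar_lt (Fin T) c0b) ->
  exists al de, (forall x, al <= x <= de -> E x) /\
    forall y z, Rbar_E y z -> Rbar_le (F y z) (Fin T) -> al <= y /\ z <= de.
Proof.
  intros HT HTa HTb.
  destruct (F0_sublevel_lower T HT HTa HTb) as (al & Eal & Hal & Hlow).
  destruct (F0_sublevel_upper T HT HTa HTb) as (de & Ede & Hde & Hup).
  exists al, de. split; [|split; [eapply Hlow|eapply Hup]; eauto].
  intros x [Hx1 Hx2].
  destruct (Req_dec x al) as [->|Hn1]; auto. destruct (Req_dec x de) as [->|Hn2]; auto.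
  apply inE_inI. split; [apply Hal|apply Hde]; lra.
Qed.

Lemma F0_finite_lt y z r : F y z = Fin r -> y < z.
Proof.
  intros Hr. destruct (Rlt_dec y z) as [Hlt|Hn]; auto.
  rewrite F0_diag in Hr by exact Hn. discriminate.
Qed.

Lemma F0_min_of_everywhere_infinite : ~ (exists y z r, inRr a b mu sigma x0 y z /\ F y z = Fin r) ->
  exists y0 z0, inRr a b mu sigma x0 y0 z0 /\
    forall y z, Rbar_E y z -> Rbar_le (F y0 z0) (F y z).
Proof.
  intros Hnone.
  assert (Hall : forall y z, Rbar_E y z -> F y z = PInf).
  { intros y z Hyz. destruct (F y z) as [r|] eqn:Er; auto.
    exfalso. apply Hnone. pose proof (F0_finite_lt y z r Er).
    destruct Hyz as [Ey [Ez _]]. exists y, z, r. repeat split; auto. }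
  destruct (inI_exists_gt x0 inI_x0) as [z1 [Iz1 Hz1]].
  exists x0, z1. split; [repeat split; auto using inE_inI, inI_x0|].
  intros y z Hyz. rewrite (Hall y z Hyz). destruct (F x0 z1); exact Logic.I.
Qed.

End Diffusion.

Theorem theorem4p7
  (a b : option R) (mu sigma : R -> R) (x0 : R) (refl : Prop)
  (c0 : R -> R) (c0a c0b : Rbar) (c1 : R -> R -> Rbar) (k1 : R)
  (Hset : setting a b mu sigma x0)
  (HA : condA a b mu sigma x0 refl)
  (HB : condB a b mu sigma x0 refl c0 c0a c0b c1 k1)
  (HC : condC a b mu sigma x0 c0 c0a c0b c1) :
  exists y0 z0, inRr a b mu sigma x0 y0 z0 /\
    forall y z, inRbar a b mu sigma x0 y z ->
      Rbar_le (F0 a b mu sigma x0 c0 c1 y0 z0) (F0 a b mu sigma x0 c0 c1 y z).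
Proof.
  destruct (classic (exists y z r, inRr a b mu sigma x0 y z /\ F0 a b mu sigma x0 c0 c1 y z = Fin r))
    as [Hfin|Hnone]; [|exact (F0_min_of_everywhere_infinite Hset Hnone)].
  destruct (F0_witness_below_c0 HC Hfin) as (yw & zw & rw & Hw & HFw & Hwa & Hwb).
  assert (Dw : inRbar a b mu sigma x0 yw zw) by (destruct Hw as (? & ? & ?); repeat split; auto; lra).
  assert (Hrw : 0 < rw) by (pose proof (F0_gt_0 Hset HA HB HC yw zw Dw) as H; rewrite HFw in H; exact H).
  destruct (Rbar_lt_common_gap _ _ rw c0a c0b Hwa Hwb) as (T & HrT & HTa & HTb).
  destruct (F0_sublevel_in_box Hset HA HB HC T ltac:(lra) HTa HTb) as (al & de & Hbox & Hsub).
  destruct (sublevel_attains_min (inE a b mu sigma x0) (F0 a b mu sigma x0 c0 c1) T al de)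
    as (y0 & z0 & D0 & Hmin); auto.
  - intros y z r Hyz Hr. pose proof (F0_gt_0 Hset HA HB HC y z Hyz) as H. rewrite Hr in H. simpl in H. lra.
  - intros y z Hyz _ _. apply (F0_lsc Hset HA HB HC y z Hyz).
  - exists yw, zw. split; [exact Dw|]. rewrite HFw. simpl. lra.
  - exists y0, z0. destruct D0 as (Ey0 & Ez0 & Hle0). repeat split; auto.
    specialize (Hmin yw zw Dw). rewrite HFw in Hmin.
    destruct (F0 a b mu sigma x0 c0 c1 y0 z0) as [r0|] eqn:E0; [|contradiction].
    exact (F0_finite_lt y0 z0 r0 E0).
Qed.
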